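(* Let $p$ be a program. Then $p$ is in $\to_{\mathrm{und}}$-normal form (there is no $q$ with $p\to_{\mathrm{und}}q$) if and only if $\mathrm{unorm}(p)$.
   Context: Syntax. Terms $t,u,s ::= x\mid\lambda x.t\mid t\,u$; values $v ::= \lambda x.t$ (variables are not values); environments $E ::= \epsilon\mid E[x\leftarrow t]$; programs $p ::= (t,E)$; $x$ is bound in $E$ and $u$ in $(u,E[x\leftarrow t])$; up to $\alpha$; appended ES bind variables not in the domain of the program/context. Inert terms $i ::= x\mid i\,f$, fireballs $f ::= v\mid i$, non-variable inert terms $i^{+} ::= i\,f$. Contexts. Open term evaluation contexts $\mathcal{H} ::= \langle\cdot\rangle\mid\mathcal{H}\,t\mid i\,\mathcal{H}$; applicative term contexts $\mathcal{H}^{@} ::= \langle\cdot\rangle\,t\mid\mathcal{H}^{@}\,t\mid i\,\mathcal{H}^{@}$. Term contexts $C ::= \langle\cdot\rangle\mid C\,t\mid t\,C$; environment contexts $G ::= E[x\leftarrow C]\mid G[x\leftarrow u]$; program contexts $P ::= (C,E)\mid(t,G)$. Appending: $(t,E)@[x\leftarrow u]=(t,E[x\leftarrow u])$, $(C,E)@[x\leftarrow u]=(C,E[x\leftarrow u])$, $(t,G)@[x\leftarrow u]=(t,G[x\leftarrow u])$, and $(t,E)@[x\leftarrow C]:=(t,E[x\leftarrow C])$. Plugging: $(C,E)\langle(t,E')\rangle=(C\langle t\rangle,E'E)$; $(u,E[x\leftarrow C])\langle(t,E')\rangle=(u,E[x\leftarrow C\langle t\rangle]E')$; $(u,G[x\leftarrow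 s])\langle(t,E)\rangle=((u,G)\langle(t,E)\rangle)@[x\leftarrow s]$; $P\langle t\rangle:=P\langle(t,\epsilon)\rangle$. Look-up $P(x)=t$ if the ES list of $P$ contains $[x\leftarrow t]$ with $t$ a term, $\bot$ otherwise. $v^{\alpha}$: copy of $v$ with fresh bound variables. Variable sets. $nv(x)=\{x\}$, $nv(\lambda x.t)=\emptyset$, $nv(tu)=nv(t)\cup nv(u)$; $nv((t,\epsilon))=nv(t)$, $nv((t,E[x\leftarrow u]))=nv((t,E))$ if $x\notin nv((t,E))$, else $(nv((t,E))\setminus\{x\})\cup nv(u)$. $an(\lambda x.t)=an(x)=\emptyset$; $an(tu)=\{x\}\cup an(u)$ if $t=x$ variable, else $an(t)\cup an(u)$; $an((t,\epsilon))=an(t)$; $an((t,E[x\leftarrow u]))$ is $an((t,E))$ if $x\notin nv((t,E))$; $(an((t,E))\setminus\{x\})\cup an(u)$ if $x\in nv((t,E))$ and ($x\notin an((t,E))$ or $u$ not a variable); $(an((t,E))\setminus\{x\})\cup\{y\}$ if $x\in nv((t,E))$, $x\in an((t,E))$, $u=y$ variable; $an(\langle\cdot\rangle)=\emptyset$, $an(\mathcal{H}\,t)=an(\mathcal{H})$, $an(i\,\mathcal{H})=an(i)\cup an(\mathcal{H})$. $un(\lambda x.t)=\emptyset$, $un(x)=\{x\}$, $un(tu)=un(u)$ if $t$ variable, else $un(t)\cup un(u)$; $un((t,\epsilon))=un(t)$; $un((t,E[x\leftarrow u]))$ is $un((t,E))$ if $x\notin un((t,E))$ and ($x\notin nv((t,E))$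 or $u$ a variable), and $(un((t,E))\setminus\{x\})\cup un(u)$ if $x\in un((t,E))$ or ($x\in nv((t,E))$ and $u$ not a variable); $un(\langle\cdot\rangle)=\emptyset$, $un(\mathcal{H}\,t)=un(\mathcal{H})$, $un(i\,\mathcal{H})=un(i)\cup un(\mathcal{H})$. $\mathrm{upd}(S,x,y):=S$ if $x\notin S$, else $(S\setminus\{x\})\cup\{y\}$. Multiplicative contexts $P\in\mathcal{M}_{{\mathcal{U}},{\mathcal{A}}}$, inductively: $(\mathcal{H},\epsilon)\in\mathcal{M}_{un(\mathcal{H}),an(\mathcal{H})}$; and, each with premise $P\in\mathcal{M}_{{\mathcal{U}},{\mathcal{A}}}$: $x\in{\mathcal{U}}\cup{\mathcal{A}}$ $\Rightarrow$ $P@[x\leftarrow y]\in\mathcal{M}_{\mathrm{upd}({\mathcal{U}},x,y),\mathrm{upd}({\mathcal{A}},x,y)}$; $x\notin{\mathcal{U}}\cup{\mathcal{A}}$ $\Rightarrow$ $P@[x\leftarrow t]\in\mathcal{M}_{{\mathcal{U}},{\mathcal{A}}}$; $x\in{\mathcal{U}}\cup{\mathcal{A}}$ $\Rightarrow$ $P@[x\leftarrow i^{+}]\in\mathcal{M}_{({\mathcal{U}}\setminus\{x\})\cup un(i^{+}),({\mathcal{A}}\setminus\{x\})\cup an(i^{+})}$; $x\in{\mathcal{U}}\setminus{\mathcal{A}}$ $\Rightarrow$ $P@[x\leftarrow v]\in\mathcal{M}_{{\mathcal{U}}\setminus\{x\},{\mathcal{A}}}$; $x\notin{\mathcal{U}}\cup{\mathcal{A}}$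 $\Rightarrow$ $P\langle x\rangle@[x\leftarrow\mathcal{H}]\in\mathcal{M}_{{\mathcal{U}}\cup un(\mathcal{H}),{\mathcal{A}}\cup an(\mathcal{H})}$. Exponential contexts $P\in\mathcal{X}_{{\mathcal{U}},{\mathcal{A}}}$, inductively: $(\mathcal{H}^{@},\epsilon)\in\mathcal{X}_{un(\mathcal{H}^{@}),an(\mathcal{H}^{@})}$; $P\in\mathcal{M}_{{\mathcal{U}},{\mathcal{A}}}$, $x\notin{\mathcal{U}}\cup{\mathcal{A}}$ $\Rightarrow$ $P\langle x\rangle@[x\leftarrow\mathcal{H}^{@}]\in\mathcal{X}_{({\mathcal{U}}\setminus\{x\})\cup un(\mathcal{H}^{@}),{\mathcal{A}}\cup an(\mathcal{H}^{@})}$; and, each with premise $P\in\mathcal{X}_{{\mathcal{U}},{\mathcal{A}}}$: $x\in{\mathcal{U}}\cup{\mathcal{A}}$ $\Rightarrow$ $P@[x\leftarrow y]\in\mathcal{X}_{\mathrm{upd}({\mathcal{U}},x,y),\mathrm{upd}({\mathcal{A}},x,y)}$; $x\in{\mathcal{U}}\cup{\mathcal{A}}$ $\Rightarrow$ $P@[x\leftarrow i^{+}]\in\mathcal{X}_{({\mathcal{U}}\setminus\{x\})\cup un(i^{+}),({\mathcal{A}}\setminus\{x\})\cup an(i^{+})}$; $x\notin{\mathcal{U}}\cup{\mathcal{A}}$ $\Rightarrow$ $P@[x\leftarrow t]\in\mathcal{X}_{{\mathcal{U}},{\mathcal{A}}}$; $x\in{\mathcal{U}}\setminus{\mathcal{A}}$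 $\Rightarrow$ $P@[x\leftarrow v]\in\mathcal{X}_{{\mathcal{U}}\setminus\{x\},{\mathcal{A}}}$; $x\notin{\mathcal{A}}$ $\Rightarrow$ $P\langle x\rangle@[x\leftarrow\langle\cdot\rangle]\in\mathcal{X}_{{\mathcal{U}}\setminus\{x\},{\mathcal{A}}}$. Useful Open CbNeed rules: $P\langle(\lambda x.t)u\rangle\to_{\mathrm{um}}P\langle(t,[x\leftarrow u])\rangle$ if $P\in\mathcal{M}_{{\mathcal{U}},{\mathcal{A}}}$ for some ${\mathcal{U}},{\mathcal{A}}$; $P\langle x\rangle\to_{\mathrm{ue}}P\langle v^{\alpha}\rangle$ if $P\in\mathcal{X}_{{\mathcal{U}},{\mathcal{A}}}$ for some ${\mathcal{U}},{\mathcal{A}}$ and $P(x)=v$; $\to_{\mathrm{und}}:=\to_{\mathrm{um}}\cup\to_{\mathrm{ue}}$. Predicates, inductively. $\mathrm{gvar}_x((x,\epsilon))$; $\mathrm{gvar}_x(p)\Rightarrow\mathrm{gvar}_y(p@[x\leftarrow y])$; $\mathrm{gvar}_x(p)$, $z\neq x$ $\Rightarrow$ $\mathrm{gvar}_x(p@[z\leftarrow t])$. $\mathrm{uabs}((v,\epsilon))$; $\mathrm{gvar}_x(p)\Rightarrow\mathrm{uabs}(p@[x\leftarrow v])$; $\mathrm{uabs}(p)\Rightarrow\mathrm{uabs}(p@[x\leftarrow t])$. $\mathrm{uinert}((i^{+},\epsilon))$; $\mathrm{gvar}_x(p)\Rightarrow\mathrm{uinert}(p@[x\leftarrow i^{+}])$;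 $\mathrm{uinert}(p)$, $x\in nv(p)$ $\Rightarrow$ $\mathrm{uinert}(p@[x\leftarrow i])$; $\mathrm{uinert}(p)$, $x\in un(p)$, $x\notin an(p)$ $\Rightarrow$ $\mathrm{uinert}(p@[x\leftarrow v])$; $\mathrm{uinert}(p)$, $x\notin nv(p)$ $\Rightarrow$ $\mathrm{uinert}(p@[x\leftarrow t])$. $\mathrm{unorm}(p)$ iff $\mathrm{uinert}(p)$ or $\mathrm{uabs}(p)$ or $\mathrm{gvar}_x(p)$ for some $x$. *)

From Stdlib Require List.
From mathcomp Require Import all_boot.
Set Implicit Arguments. Unset Strict Implicit. Unset Printing Implicit Defensive.

Definition var := nat.

(* Locally nameless terms: bound variables of lambdas are de Bruijn indices
   (so terms are identified up to alpha for lambda-binders), free variables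
   are names.  "Variables" of the paper are the [fvar x]. *)
Inductive term : Type :=
| bvar : nat -> term
| fvar : var -> term
| lam  : term -> term
| app  : term -> term -> term.

Fixpoint open_rec (k : nat) (u t : term) : term :=
  match t with
  | bvar n => if n == k then u else bvar n
  | fvar x => fvar x
  | lam t1 => lam (open_rec k.+1 u t1)
  | app t1 t2 => app (open_rec k u t1) (open_rec k u t2)
  end.
(* t^x : body of a lambda instantiated with the name x *)
Definition open (t : term) (x : var) : term := open_rec 0 (fvar x) t.

Fixpoint lc_at (k : nat) (t : term) : bool :=
  match t with
  | bvar n => n < k
  | fvar _ => true
  | lam t1 => lc_at k.+1 t1
  | app t1 t2 => lc_at k t1 && lc_at k t2
  end.
Definition lc (t : term) : bool := lc_at 0 t.

Fixpoint fv (t : term) : seq var :=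
  match t with
  | bvar _ => [::]
  | fvar x => [:: x]
  | lam t1 => fv t1
  | app t1 t2 => fv t1 ++ fv t2
  end.

Definition is_var (t : term) : bool := if t is fvar _ then true else false.
Definition is_val (t : term) : bool := if t is lam _ then true else false.

(* inert terms  i ::= x | i f ;  fireballs f ::= v | i *)
Fixpoint is_inert (t : term) : bool :=
  match t with
  | fvar _ => true
  | app i f => is_inert i && (is_val f || is_inert f)
  | _ => false
  end.
Definition is_inert_plus (t : term) : bool :=
  if t is app _ _ then is_inert t else false.

Definition sdel (x : var) (S : seq var) : seq var := [seq z <- S | z != x].
Definition upd (S : seq var) (x y : var) : seq var :=
  if x \in S then y :: sdel x S else S.

Fixpoint nvT (t : term) : seq var :=
  match t with
  | fvar x => [:: x]
  | app t1 t2 => nvT t1 ++ nvT t2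
  | _ => [::]
  end.

Fixpoint anT (t : term) : seq var :=
  match t with
  | app t1 t2 =>
      match t1 with
      | fvar x => x :: anT t2
      | _ => anT t1 ++ anT t2
      end
  | _ => [::]
  end.

Fixpoint unT (t : term) : seq var :=
  match t with
  | fvar x => [:: x]
  | app t1 t2 =>
      match t1 with
      | fvar _ => unT t2
      | _ => unT t1 ++ unT t2
      end
  | _ => [::]
  end.

(* An environment is a list of ES, OUTERMOST FIRST:
   E[x<-t] is represented by (x, t) :: E. *)
Definition env := seq (var * term).
Definition prog := (term * env)%type.

Definition pES (p : prog) (x : var) (t : term) : prog := (p.1, (x, t) :: p.2).
Definition dom (p : prog) : seq var := map fst p.2.

Fixpoint nvP_aux (t : term) (E : env) : seq var :=
  match E with
  | [::] => nvT t
  | (x, u) :: E' =>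
      let S := nvP_aux t E' in
      if x \in S then sdel x S ++ nvT u else S
  end.
Definition nvP (p : prog) := nvP_aux p.1 p.2.

Fixpoint anP_aux (t : term) (E : env) : seq var :=
  match E with
  | [::] => anT t
  | (x, u) :: E' =>
      let N := nvP_aux t E' in
      let A := anP_aux t E' in
      if x \notin N then A
      else match u with
           | fvar y => if x \in A then sdel x A ++ [:: y] else sdel x A ++ anT u
           | _ => sdel x A ++ anT u
           end
  end.
Definition anP (p : prog) := anP_aux p.1 p.2.

Fixpoint unP_aux (t : term) (E : env) : seq var :=
  match E with
  | [::] => unT t
  | (x, u) :: E' =>
      let N := nvP_aux t E' in
      let U := unP_aux t E' in
      if (x \in U) || ((x \in N) && ~~ is_var u) then sdel x U ++ unT u else U
  end.
Definition unP (p : prog) := unP_aux p.1 p.2.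

Inductive tctx : Type :=
| Hole : tctx
| CAppL : tctx -> term -> tctx
| CAppR : term -> tctx -> tctx.

Fixpoint plugT (C : tctx) (t : term) : term :=
  match C with
  | Hole => t
  | CAppL C1 u => app (plugT C1 t) u
  | CAppR u C1 => app u (plugT C1 t)
  end.

Fixpoint isH (C : tctx) : bool :=
  match C with
  | Hole => true
  | CAppL C1 _ => isH C1
  | CAppR i C1 => is_inert i && isH C1
  end.
(* applicative contexts  H@ ::= <.> t | H@ t | i H@ *)
Fixpoint isHapp (C : tctx) : bool :=
  match C with
  | Hole => false
  | CAppL C1 _ => if C1 is Hole then true else isHapp C1
  | CAppR i C1 => is_inert i && isHapp C1
  end.

Fixpoint anC (C : tctx) : seq var :=
  match C with
  | Hole => [::]
  | CAppL C1 _ => anC C1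
  | CAppR i C1 => anT i ++ anC C1
  end.
Fixpoint unC (C : tctx) : seq var :=
  match C with
  | Hole => [::]
  | CAppL C1 _ => unC C1
  | CAppR i C1 => unT i ++ unC C1
  end.

(* PC C E        represents (C, E);
   PG u E1 x C E2 represents (u, E1[x<-C]E2)  (E1, E2 outermost first). *)
Inductive pctx : Type :=
| PC : tctx -> env -> pctx
| PG : term -> env -> var -> tctx -> env -> pctx.

Definition pctxES (P : pctx) (x : var) (u : term) : pctx :=
  match P with
  | PC C E => PC C ((x, u) :: E)
  | PG t E1 y C E2 => PG t E1 y C ((x, u) :: E2)
  end.
Definition progC (p : prog) (x : var) (C : tctx) : pctx := PG p.1 p.2 x C [::].

Definition pdom (P : pctx) : seq var :=
  match P with
  | PC _ E => map fst E
  | PG _ E1 y _ E2 => map fst E2 ++ y :: map fst E1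
  end.

Definition plug (P : pctx) (p : prog) : prog :=
  match P with
  | PC C E => (plugT C p.1, E ++ p.2)
  | PG u E1 y C E2 => (u, E2 ++ p.2 ++ (y, plugT C p.1) :: E1)
  end.
Definition plugt (P : pctx) (t : term) : prog := plug P (t, [::]).

Definition lookup (P : pctx) (x : var) (t : term) : Prop :=
  match P with
  | PC _ E => List.In (x, t) E
  | PG _ E1 _ _ E2 => List.In (x, t) E1 \/ List.In (x, t) E2
  end.

Inductive Mctx : pctx -> seq var -> seq var -> Prop :=
| M_base H : isH H -> Mctx (PC H [::]) (unC H) (anC H)
| M_var P U A x y : Mctx P U A -> x \in U ++ A -> x \notin pdom P ->
    Mctx (pctxES P x (fvar y)) (upd U x y) (upd A x y)
| M_gen P U A x t : Mctx P U A -> x \notin U ++ A -> x \notin pdom P ->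
    Mctx (pctxES P x t) U A
| M_inert P U A x i : Mctx P U A -> x \in U ++ A -> is_inert_plus i ->
    x \notin pdom P ->
    Mctx (pctxES P x i) (sdel x U ++ unT i) (sdel x A ++ anT i)
| M_val P U A x v : Mctx P U A -> x \in U -> x \notin A -> is_val v ->
    x \notin pdom P ->
    Mctx (pctxES P x v) (sdel x U) A
| M_hole P U A x H : Mctx P U A -> x \notin U ++ A -> isH H -> x \notin pdom P ->
    Mctx (progC (plugt P (fvar x)) x H) (U ++ unC H) (A ++ anC H).

Inductive Xctx : pctx -> seq var -> seq var -> Prop :=
| X_base H : isHapp H -> Xctx (PC H [::]) (unC H) (anC H)
| X_holeM P U A x H : Mctx P U A -> x \notin U ++ A -> isHapp H ->
    x \notin pdom P ->
    Xctx (progC (plugt P (fvar x)) x H) (sdel x U ++ unC H) (A ++ anC H)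
| X_var P U A x y : Xctx P U A -> x \in U ++ A -> x \notin pdom P ->
    Xctx (pctxES P x (fvar y)) (upd U x y) (upd A x y)
| X_inert P U A x i : Xctx P U A -> x \in U ++ A -> is_inert_plus i ->
    x \notin pdom P ->
    Xctx (pctxES P x i) (sdel x U ++ unT i) (sdel x A ++ anT i)
| X_gen P U A x t : Xctx P U A -> x \notin U ++ A -> x \notin pdom P ->
    Xctx (pctxES P x t) U A
| X_val P U A x v : Xctx P U A -> x \in U -> x \notin A -> is_val v ->
    x \notin pdom P ->
    Xctx (pctxES P x v) (sdel x U) A
| X_hole P U A x : Xctx P U A -> x \notin A -> x \notin pdom P ->
    Xctx (progC (plugt P (fvar x)) x Hole) (sdel x U) A.

Definition allvars (p : prog) : seq var :=
  fv p.1 ++ flatten [seq e.1 :: fv e.2 | e <- p.2].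

(* multiplicative step; the lambda-bound variable is instantiated with a
   name x fresh for the whole program (alpha-renaming convention) *)
Definition step_um (p q : prog) : Prop :=
  exists P U A t u x,
    Mctx P U A /\ p = plugt P (app (lam t) u) /\ x \notin allvars p /\
    q = plug P (open t x, [:: (x, u)]).

(* exponential step; in the locally nameless syntax the fresh copy v^alpha
   of v is v itself *)
Definition step_ue (p q : prog) : Prop :=
  exists P U A x v,
    Xctx P U A /\ p = plugt P (fvar x) /\ lookup P x v /\ is_val v /\
    q = plugt P v.

Definition step_und (p q : prog) : Prop := step_um p q \/ step_ue p q.

Inductive gvar : var -> prog -> Prop :=
| gvar_base x : gvar x (fvar x, [::])
| gvar_ren x y p : gvar x p -> x \notin dom p -> gvar y (pES p x (fvar y))
| gvar_skip x z t p : gvar x p -> z != x -> z \notin dom p -> gvar x (pES p z t).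

Inductive uabs : prog -> Prop :=
| uabs_base v : is_val v -> uabs (v, [::])
| uabs_var x p v : gvar x p -> is_val v -> x \notin dom p -> uabs (pES p x v)
| uabs_skip x p t : uabs p -> x \notin dom p -> uabs (pES p x t).

Inductive uinert : prog -> Prop :=
| uinert_base i : is_inert_plus i -> uinert (i, [::])
| uinert_var x p i : gvar x p -> is_inert_plus i -> x \notin dom p ->
    uinert (pES p x i)
| uinert_inert x p i : uinert p -> x \in nvP p -> is_inert i -> x \notin dom p ->
    uinert (pES p x i)
| uinert_val x p v : uinert p -> x \in unP p -> x \notin anP p -> is_val v ->
    x \notin dom p -> uinert (pES p x v)
| uinert_skip x p t : uinert p -> x \notin nvP p -> x \notin dom p ->
    uinert (pES p x t).

Definition unorm (p : prog) : Prop := uinert p \/ uabs p \/ exists x, gvar x p.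

(* all terms locally closed; ES-bound names pairwise distinct; and every
   ES-bound name occurs free only within its scope (Barendregt convention):
   the name bound by an ES does not occur free in its own ES term nor in
   any ES further out. *)
Fixpoint scoped (E : env) : bool :=
  match E with
  | [::] => true
  | (x, u) :: E' => all (fun y => y \notin fv u) (x :: map fst E') && scoped E'
  end.

Definition wf_prog (p : prog) : bool :=
  lc p.1 && all (fun e => lc e.2) p.2 && uniq (dom p) && scoped p.2.

(* Soundness: a variable plugged in the hole of a multiplicative (resp. exponential) context
   is needed (resp. applied) in the resulting program, so [unorm] forces whatever fills the
   hole, or the ES binding it, to be a fireball that cannot fire (resp. not an abstraction).
   Completeness is proved by induction on the environment, appending the outermost ES
   [x <- u] to a program that is either normal or has a redex.  If [x] is not needed, or [u]
   is a variable, an inert term or (for an unapplied [x]) an abstraction, the context sets are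
   updated and the normal form or the redex persists.  Otherwise the next step is inside [u],
   or substitutes the abstraction [u] for [x]; to exhibit it, the context is re-rooted at the
   first needed occurrence of [x], by inductions whose invariant is that the sets only shrink. *)

From mathcomp Require Import all_boot.
Set Implicit Arguments. Unset Strict Implicit. Unset Printing Implicit Defensive.

Lemma mem_sdel (x y : var) S : (y \in sdel x S) = (y != x) && (y \in S).
Proof. by rewrite mem_filter. Qed.

Lemma mem_upd (S : seq var) x z y :
  (y \in upd S x z) = if x \in S then (y == z) || (y != x) && (y \in S) else y \in S.
Proof. by rewrite /upd; case: ifP; rewrite ?inE ?mem_sdel. Qed.

Lemma mem_if (T : eqType) (a : T) (b : bool) (S1 S2 : seq T) :
  (a \in if b then S1 else S2) = if b then a \in S1 else a \in S2.
Proof. by case: b. Qed.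

Ltac mem_leaf :=
  move=> *; repeat match goal with
  | H : is_true true -> _ |- _ => specialize (H isT)
  | H : is_true false -> _ |- _ => clear H
  end; first [done | match goal with
    | H : is_true false |- _ => discriminate H
    | H : ?a <> ?a |- _ => by case: H end].

(* Decides a goal built from membership, equality and shape atoms with boolean connectives
   by exhaustive case analysis; the relevant hypotheses must first be moved to the goal.
   Rewriting with [E] also rewrites the occurrences of the atom elaborated with another,
   convertible, instance. *)
Ltac mem_solve :=
  repeat progress rewrite ?mem_if ?mem_cat ?mem_sdel ?mem_upd ?in_cons ?in_nil ?eqxx /=;
  first
  [ mem_leaf
  | match goal with
    | |- context [?a == ?b] => case: (a =P b) => [?|?]; [try subst a; try subst b|]
    | |- context [?a \in ?S] => let E := fresh in case E: (a \in S); rewrite ?E; clear E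
    | |- context [is_val ?u] => case: (is_val u)
    | |- context [is_var ?u] => case: (is_var u)
    end; mem_solve ].

(** * Terms and evaluation contexts *)

Lemma val_nvT v : is_val v -> nvT v = [::].
Proof. by case: v. Qed.

Lemma val_anT v : is_val v -> anT v = [::].
Proof. by case: v. Qed.

Lemma var_nvT u x : is_var u -> x \in nvT u -> u = fvar x.
Proof. by case: u => //= y _; rewrite inE => /eqP->. Qed.

Lemma var_anT u : is_var u -> anT u = [::].
Proof. by case: u. Qed.

Lemma inert_plus_inert i : is_inert_plus i -> is_inert i.
Proof. by case: i. Qed.

Lemma inert_not_val i : is_inert i -> ~~ is_val i.
Proof. by case: i. Qed.

Lemma unT_sub_nvT t : {subset unT t <= nvT t}.
Proof.
elim: t => [//|y a //|//|t1 IH1 t2 IH2 a].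
by case: t1 IH1 => [n|y|t|t1 t1'] IH1; move: (IH1 a) (IH2 a); mem_solve.
Qed.

Lemma anT_sub_nvT t : {subset anT t <= nvT t}.
Proof.
elim: t => [//|//|//|t1 IH1 t2 IH2 a].
by case: t1 IH1 => [n|y|t|t1 t1'] IH1; move: (IH1 a) (IH2 a); mem_solve.
Qed.

Lemma notin_nvT x t : x \notin nvT t -> x \notin unT t /\ x \notin anT t.
Proof. by move=> xt; split; apply: contra xt; [apply: unT_sub_nvT|apply: anT_sub_nvT]. Qed.

Lemma inert_nvT_sub i : is_inert i -> {subset nvT i <= unT i ++ anT i}.
Proof.
elim: i => [//|y _ a|//|t1 IH1 t2 IH2 /= /andP[i1 f2] a]; first by rewrite cats0.
have IH2' : a \in nvT t2 -> a \in unT t2 ++ anT t2.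
  by case/orP: f2 => [|/IH2 /(_ a) //]; case: t2 {IH2}.
by case: t1 IH1 i1 => // [y|t1 t1'] IH1 i1; move: IH2'; [|move: (IH1 i1 a)]; mem_solve.
Qed.

Lemma mem_nvT_inert i x : is_inert i -> (x \in nvT i) = (x \in unT i ++ anT i).
Proof.
move=> ii; apply/idP/idP; first exact: inert_nvT_sub.
by rewrite mem_cat => /orP[/unT_sub_nvT|/anT_sub_nvT].
Qed.

Lemma nvT_plug_hole C y : y \in nvT (plugT C (fvar y)).
Proof. by elim: C => [|C IH t|i C IH] /=; rewrite ?inE ?mem_cat ?IH ?orbT. Qed.

Lemma fv_plug_hole C y : y \in fv (plugT C (fvar y)).
Proof. by elim: C => [|C IH t|i C IH] /=; rewrite ?inE ?mem_cat ?IH ?orbT. Qed.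

Lemma isHapp_isH H : isHapp H -> isH H.
Proof.
elim: H => [|C IH t|i C IH] //=; last by case/andP=> -> /IH.
by case: C IH => //= C' t' IH /IH.
Qed.

Lemma isHapp_app H s : isHapp H -> exists a b, plugT H s = app a b.
Proof. by case: H => [|C t|i C] //= _; do 2!eexists. Qed.

Lemma anT_plug_app_hole H y : isHapp H -> y \in anT (plugT H (fvar y)).
Proof.
elim: H => [|C IH t|i C IH] //=.
  case: C IH => [|C' t'|i' C'] IH /=; first by rewrite inE eqxx.
  - by move/IH; rewrite mem_cat => ->.
  - by move/IH; rewrite mem_cat => ->.
by case/andP=> _ /IH Hy; case: i => *; rewrite /= ?mem_cat ?inE Hy ?orbT.
Qed.

Lemma Hctx_plug_inert H s : isH H -> is_inert (plugT H s) -> is_val s || is_inert s.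
Proof.
elim: H => [|C IH t|i C IH] /=; first by move=> _ ->; rewrite orbT.
  by move=> HC /andP[/(IH HC)].
case/andP=> _ HC /andP[_].
by case: C IH HC => [|C' t'|i' C'] IH HC //= /(IH HC).
Qed.

Lemma Hctx_plug_fireball H s : isH H ->
  is_val (plugT H s) || is_inert (plugT H s) -> is_val s || is_inert s.
Proof. by move=> HH /orP[|/(Hctx_plug_inert HH)//]; case: H HH => //= _ ->. Qed.

Definition Hredex (t : term) := exists H t1 t2, isH H /\ t = plugT H (app (lam t1) t2).

Lemma lc_term_cases t : lc t -> [\/ is_var t, is_val t, is_inert_plus t | Hredex t].
Proof.
rewrite /lc; elim: t => [//|y|s _|t1 IH1 t2 IH2] /=; [by constructor 1|by constructor 2|].
case/andP=> /IH1 c1 /IH2 c2; have [i1|ni1] := boolP (is_inert t1).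
  case: c2 => [v2|v2|/inert_plus_inert i2|[H [a [b [HH ->]]]]].
  - by constructor 3; case: (t2) v2.
  - by constructor 3; rewrite v2.
  - by constructor 3; rewrite i2 orbT.
  - by constructor 4; exists (CAppR t1 H), a, b; rewrite /= i1 HH.
case: c1 => [v1|v1|/inert_plus_inert i1|[H [a [b [HH ->]]]]].
- by case: (t1) v1 ni1.
- by constructor 4; case: t1 v1 {IH1 ni1} => // s _; exists Hole, s, t2.
- by rewrite i1 in ni1.
- by constructor 4; exists (CAppL H t2), a, b.
Qed.

Definition sets_le (U0 A0 U A : seq var) :=
  {subset U0 ++ A0 <= U ++ A} /\ {subset A0 <= A}.

Lemma sets_le_trans U1 A1 U0 A0 U A :
  sets_le U0 A0 U1 A1 -> sets_le U1 A1 U A -> sets_le U0 A0 U A.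
Proof. by move=> [s1 s2] [t1 t2]; split=> a; [move/s1/t1|move/s2/t2]. Qed.

Lemma sets_le_cat U0 A0 U A V B :
  sets_le U0 A0 U A -> sets_le (V ++ U0) (B ++ A0) (V ++ U) (B ++ A).
Proof. by move=> [s1 s2]; split=> a; move: (s1 a) (s2 a); mem_solve. Qed.

Lemma sets_le_catr U0 A0 U A V B : sets_le U0 A0 U A -> sets_le U0 A0 (U ++ V) (A ++ B).
Proof. by move=> [s1 s2]; split=> a; move: (s1 a) (s2 a); mem_solve. Qed.

Lemma sets_le_sdel z U0 A0 U A : sets_le U0 A0 U A -> sets_le (sdel z U0) A0 U A.
Proof. by move=> [s1 s2]; split=> a; move: (s1 a) (s2 a); mem_solve. Qed.

Lemma sets_le_cons h U A : sets_le U A (h :: U) A.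
Proof. by split=> a; mem_solve. Qed.

Lemma sets_le_plugT C s : sets_le (unC C) (anC C) (unT (plugT C s)) (anT (plugT C s)).
Proof.
elim: C => [|C [IH1 IH2] t|i C [IH1 IH2]]; first by split.
  by case: C IH1 IH2 => [|C' t'|i' C'] IH1 IH2; split=> a; move: (IH1 a) (IH2 a); mem_solve.
by case: i => *; split=> a; move: (IH1 a) (IH2 a); mem_solve.
Qed.

Lemma inert_hole_at i x : is_inert i -> x \in nvT i ->
  exists H, [/\ isH H, plugT H (fvar x) = i, x \notin unC H ++ anC H
    & sets_le (unC H) (anC H) (unT i) (anT i)].
Proof.
move=> ii xi.
suff [H [HH HP xH]] : exists H, [/\ isH H, plugT H (fvar x) = i & x \notin unC H ++ anC H].
  by exists H; split=> //; rewrite -HP; apply: sets_le_plugT.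
elim: i ii xi => [//|y _|//|t1 IH1 t2 IH2 /= /andP[i1 f2]].
  by rewrite inE => /eqP->; exists Hole.
rewrite mem_cat; have [x1 _|x1 /= x2] := boolP (x \in nvT t1).
  by have [H [HH <- xH]] := IH1 i1 x1; exists (CAppL H t2).
have i2 : is_inert t2 by case/orP: f2 => //; case: t2 {IH2} x2.
have [H [HH <- xH]] := IH2 i2 x2; have [xu xa] := notin_nvT x1.
by exists (CAppR t1 H); rewrite /= i1 HH; split=> //; move: xH xu xa; mem_solve.
Qed.

Lemma inert_app_hole_at i x : is_inert i -> x \in anT i ->
  exists H, [/\ isHapp H, plugT H (fvar x) = i, x \notin anC H
    & sets_le (unC H) (anC H) (unT i) (anT i)].
Proof.
move=> ii xi; suff [H [HH HP xH]] : exists H, [/\ isHapp H, plugT H (fvar x) = i & x \notin anC H].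
  by exists H; split=> //; rewrite -HP; apply: sets_le_plugT.
elim: i ii xi => [//|//|//|t1 IH1 t2 IH2 /= /andP[i1 f2]].
have i2 : x \in anT t2 -> is_inert t2 by case/orP: f2 => //; case: t2 {IH2}.
case: t1 IH1 i1 => // [y|t1 t1'] IH1 i1.
  rewrite inE; case: eqP => [-> _|_ /= x2]; first by exists (CAppL Hole t2).
  by have [H [HH <- xH]] := IH2 (i2 x2) x2; exists (CAppR (fvar y) H).
rewrite mem_cat; have [x1 _|x1 /= x2] := boolP (x \in anT (app t1 t1')).
  by have [H [HH <- xH]] := IH1 i1 x1; exists (CAppL H t2); split=> //; case: H HH {xH}.
have [H [HH <- xH]] := IH2 (i2 x2) x2.
by exists (CAppR (app t1 t1') H); rewrite /= -/(is_inert (app t1 t1')) i1 HH mem_cat negb_or x1.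
Qed.

Lemma Hctx_hole_at H s x : isH H -> x \in unC H ++ anC H ->
  exists H0, [/\ isH H0, plugT H0 (fvar x) = plugT H s, x \notin unC H0 ++ anC H0
    & sets_le (unC H0) (anC H0) (unC H) (anC H)].
Proof.
elim: H => [//|C IH t|i C IH] /=.
  by move=> HC /(IH HC) [H0 [HH <- xH le]]; exists (CAppL H0 t).
case/andP=> i_inert HC x_in.
have [xi|xi] := boolP (x \in nvT i).
  have [H0 [HH0 HP xH0 [le1 le2]]] := inert_hole_at i_inert xi.
  exists (CAppL H0 (plugT C s)); rewrite /= HP; split=> //.
  by split=> a; move: (le1 a) (le2 a); mem_solve.
have [xu xa] := notin_nvT xi.
have [|H0 [HH0 HP xH0 le]] := IH HC; first by move: x_in xu xa; mem_solve.
exists (CAppR i H0); rewrite /= HP i_inert HH0; split=> //; last exact: sets_le_cat.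
by move: xH0 xu xa; mem_solve.
Qed.

Lemma Hctx_app_hole_at H s x : isH H -> x \in anC H ->
  exists H0, [/\ isHapp H0, plugT H0 (fvar x) = plugT H s, x \notin anC H0
    & sets_le (unC H0) (anC H0) (unC H) (anC H)].
Proof.
elim: H => [//|C IH t|i C IH] /=.
  move=> HC /(IH HC) [H0 [HH <- xH le]]; exists (CAppL H0 t); split=> //.
  by case: H0 HH {xH le}.
case/andP=> i_inert HC x_in.
have [xi|xi] := boolP (x \in anT i).
  have [H0 [HH0 HP xH0 [le1 le2]]] := inert_app_hole_at i_inert xi.
  exists (CAppL H0 (plugT C s)); rewrite /= HP; split=> //.
  - by case: H0 HH0 {HP xH0 le1 le2}.
  - by split=> a; move: (le1 a) (le2 a); mem_solve.
have [|H0 [HH0 HP xH0 le]] := IH HC; first by move: x_in xi; mem_solve.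
exists (CAppR i H0); rewrite /= HP i_inert HH0; split=> //; last exact: sets_le_cat.
by move: xH0 xi; mem_solve.
Qed.

(** * Programs and program contexts *)

Lemma pES_inj p x u q y w : pES p x u = pES q y w -> [/\ p = q, x = y & u = w].
Proof. by case: p q => [a b] [c d] [-> -> -> ->]. Qed.

Lemma pES_nil t p x u : (t, [::]) <> pES p x u.
Proof. by case: p. Qed.

Lemma dom_pES p x u : dom (pES p x u) = x :: dom p.
Proof. by case: p. Qed.

Lemma plugt_pctxES P x u s : plugt (pctxES P x u) s = pES (plugt P s) x u.
Proof. by case: P. Qed.

Lemma plugt_progC p x H s : plugt (progC p x H) s = pES p x (plugT H s).
Proof. by case: p. Qed.

Lemma dom_plugt P s : dom (plugt P s) = pdom P.
Proof. by case: P => [C E|u E1 y C E2]; rewrite /dom /= ?cats0 // map_cat. Qed.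

Lemma plugt_pdom P x p : plugt P (fvar x) = p -> pdom P = dom p.
Proof. by move<-; rewrite dom_plugt. Qed.

Lemma pdom_pctxES P x u : pdom (pctxES P x u) = x :: pdom P.
Proof. by case: P. Qed.

Lemma pdom_progC p x H : pdom (progC p x H) = x :: dom p.
Proof. by case: p. Qed.

Lemma lookup_pctxES P x u y v :
  lookup (pctxES P x u) y v <-> (y = x /\ v = u) \/ lookup P y v.
Proof.
case: P => [C E|t E1 z C E2] /=; split.
- by case=> [[-> ->]|H]; [left|right].
- by case=> [[-> ->]|H]; [left|right].
- by case=> [H|[[-> ->]|H]]; [right; left|left|right; right].
- by case=> [[-> ->]|[H|H]]; [right; left|left|right; right].
Qed.

Lemma lookup_new P x u : lookup (pctxES P x u) x u.
Proof. by apply/lookup_pctxES; left. Qed.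

Lemma In_map_fst (E : env) y v : List.In (y, v) E -> y \in map fst E.
Proof. by elim: E => //= -[a b] E IH [[-> _]|/IH]; rewrite inE ?eqxx // => ->; rewrite orbT. Qed.

Lemma lookup_pdom P y v : lookup P y v -> y \in pdom P.
Proof.
case: P => [C E|t E1 z C E2] /=; first exact: In_map_fst.
by rewrite mem_cat inE => -[/In_map_fst ->|/In_map_fst ->]; rewrite ?orbT.
Qed.

Lemma lookup_plugt P s y v : lookup P y v -> List.In (y, v) (plugt P s).2.
Proof.
case: P => [C E|t E1 z C E2] /=; first by rewrite cats0.
by case=> H; apply: List.in_or_app; [right; right|left].
Qed.

Lemma In_uniq_fst (E : env) y u v :
  uniq (map fst E) -> List.In (y, u) E -> List.In (y, v) E -> u = v.
Proof.
elim: E => [//|[a b] E IH] /= /andP[aE uE] [[<- <-]|Hu] [|Hv].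
- by case.
- by rewrite (In_map_fst Hv) in aE.
- by move=> [ya _]; rewrite -ya in Hu; rewrite (In_map_fst Hu) in aE.
- exact: IH.
Qed.

Definition val_lookup (P : pctx) (h : var) := forall u, lookup P h u -> is_val u.

Lemma val_lookup_pctxES P z u h : val_lookup (pctxES P z u) h -> val_lookup P h.
Proof. by move=> hv w hw; apply: hv; apply/lookup_pctxES; right. Qed.

Lemma val_lookup_new P z u h : val_lookup (pctxES P z u) h -> z = h -> is_val u.
Proof. by move=> hv zh; apply: hv; rewrite -zh; apply: lookup_new. Qed.

Lemma val_lookup_notin P h : h \notin pdom P -> val_lookup P h.
Proof. by move=> hP w /lookup_pdom hw; rewrite hw in hP. Qed.

(** * Appending an explicit substitution to a context *)

(* The sets of P @ [z <- u] when P belongs to M_{U,A} (or X_{U,A}) and [z <- u] is appended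
   by one of the rules for variables, inert terms, values or non-needed z; [None] when no
   such rule applies, i.e. when the next step of P @ [z <- u] takes place inside u or is an
   exponential step on z. *)
Definition es_sets (U A : seq var) (z : var) (u : term) : option (seq var * seq var) :=
  if z \notin U ++ A then Some (U, A)
  else if u is fvar y then Some (upd U z y, upd A z y)
  else if is_inert_plus u then Some (sdel z U ++ unT u, sdel z A ++ anT u)
  else if is_val u && (z \notin A) then Some (sdel z U, A)
  else None.

Variant es_sets_spec U A z u : option (seq var * seq var) -> Type :=
| EsSkip : z \notin U ++ A -> es_sets_spec U A z u (Some (U, A))
| EsVar y : z \in U ++ A -> u = fvar y -> es_sets_spec U A z u (Some (upd U z y, upd A z y))
| EsInert : z \in U ++ A -> is_inert_plus u ->
    es_sets_spec U A z u (Some (sdel z U ++ unT u, sdel z A ++ anT u))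
| EsVal : z \in U ++ A -> is_val u -> z \notin A -> es_sets_spec U A z u (Some (sdel z U, A))
| EsNone : z \in U ++ A -> ~~ is_var u -> ~~ is_inert_plus u -> (is_val u -> z \in A) ->
    es_sets_spec U A z u None.

Lemma es_setsP U A z u : es_sets_spec U A z u (es_sets U A z u).
Proof.
rewrite /es_sets; case: ifPn => [|/negbNE zUA]; first exact: EsSkip.
case: u => [n|y|t|t1 t2] /=; first [exact: EsVar | idtac].
- by apply: EsNone.
- by case: ifPn => zA; [apply: EsVal | apply: EsNone => //; rewrite negbK in zA].
- by case: ifPn => ui; [apply: EsInert | apply: EsNone].
Qed.

Lemma es_sets_notin U A z u : z \notin U ++ A -> es_sets U A z u = Some (U, A).
Proof. by rewrite /es_sets => ->. Qed.

Lemma es_sets_var U A z y : z \in U ++ A -> es_sets U A z (fvar y) = Some (upd U z y, upd A z y).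
Proof. by rewrite /es_sets => ->. Qed.

Lemma es_sets_inert U A z i : z \in U ++ A -> is_inert_plus i ->
  es_sets U A z i = Some (sdel z U ++ unT i, sdel z A ++ anT i).
Proof. by rewrite /es_sets => -> ii; case: i ii => //= t1 t2 ->. Qed.

Lemma es_sets_val U A z v : z \in U -> z \notin A -> is_val v ->
  es_sets U A z v = Some (sdel z U, A).
Proof. by rewrite /es_sets mem_cat => -> /= zA; case: v => //= t _; rewrite zA. Qed.

Lemma es_sets_fvar_some U A z y : exists U' A', es_sets U A z (fvar y) = Some (U', A').
Proof. by rewrite /es_sets; case: ifP; do 2!eexists. Qed.

Lemma es_sets_val_some U A z v : is_val v -> z \notin A ->
  exists U', es_sets U A z v = Some (U', A).
Proof.
move=> vv zA; have [zUA|zUA] := boolP (z \in U ++ A); last by exists U; apply: es_sets_notin.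
by exists (sdel z U); apply: es_sets_val => //; move: zUA zA; mem_solve.
Qed.

Lemma es_sets_inert_some U A z i : z \in U ++ A -> is_inert i ->
  exists U' A', es_sets U A z i = Some (U', A').
Proof.
move=> zUA ii; case: i ii => [//|y _|//|t1 t2 ii]; first by rewrite es_sets_var //; do 2!eexists.
by rewrite es_sets_inert //; do 2!eexists.
Qed.

Lemma es_sets_needed_shape U A z u U' A' : es_sets U A z u = Some (U', A') ->
  z \in U ++ A -> [|| is_var u, is_inert_plus u | is_val u && (z \notin A)].
Proof.
case: es_setsP => // [zUA|y _ ->|_ ->|_ -> ->] _ zUA2; rewrite ?orbT //.
by rewrite zUA2 in zUA.
Qed.

Section EsSets.
Variables (U A U' A' : seq var) (z : var) (u : term).
Hypothesis es : es_sets U A z u = Some (U', A').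

Lemma mem_es_sets x :
  (x \in U' ++ A') = (x != z) && (x \in U ++ A) || (z \in U ++ A) && (x \in nvT u).
Proof.
move: es; case: es_setsP => // [zUA|y zUA ->|zUA ui|zUA uv zA] [<- <-].
- by move: zUA; mem_solve.
- by move: zUA; mem_solve.
- by rewrite mem_nvT_inert ?inert_plus_inert //; move: zUA; mem_solve.
- by rewrite val_nvT //; move: zUA zA; mem_solve.
Qed.

Lemma mem_es_sets_A x : (x \in A') =
  [|| (x != z) && (x \in A), (z \in A) && is_var u && (x \in nvT u)
    | (z \in U ++ A) && (x \in anT u)].
Proof.
move: es; case: es_setsP => // [zUA|y zUA ->|zUA ui|zUA uv zA] [_ <-].
- by move: zUA; mem_solve.
- by move: zUA; mem_solve.
- by move: zUA; case: (u) ui => // t1 t2 _; mem_solve.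
- by move: zUA zA; case: (u) uv => // t _; mem_solve.
Qed.

End EsSets.

Lemma es_sets_mono hs U A U0 A0 z u U' A' :
  es_sets U A z u = Some (U', A') -> sets_le U0 A0 (hs ++ U) A ->
  (z \in U0 ++ A0 -> z \notin U ++ A -> is_val u) ->
  exists U0' A0', es_sets U0 A0 z u = Some (U0', A0') /\ sets_le U0' A0' (hs ++ U') A'.
Proof.
move=> es [le1 le2] zval.
have nv a : is_val u -> a \notin nvT u by move/val_nvT->.
have na a : is_val u -> a \notin anT u by move/val_anT->.
case es0: (es_sets U0 A0 z u) => [[U0' A0']|].
  exists U0', A0'; split=> //; split=> a.
    rewrite (mem_es_sets es0) -catA (mem_cat _ hs) (mem_es_sets es).
    by move: (le1 a) (le2 a) (le1 z) (le2 z) zval (nv a); mem_solve.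
  rewrite (mem_es_sets_A es0) (mem_es_sets_A es).
  by move: (le1 a) (le2 a) (le1 z) (le2 z) zval (nv a) (na a); mem_solve.
case: es_setsP es0 => // zUA0 nvar nin zA0 _.
have [zUA|zUA] := boolP (z \in U ++ A).
  have := es_sets_needed_shape es zUA; rewrite (negPf nvar) (negPf nin) /=.
  by case/andP=> /zA0/le2 ->.
by move: zUA (le2 z) (zA0 (zval zUA0 zUA)); mem_solve.
Qed.

Section EsSetsLe.
Variables (hs U A U' A' : seq var) (z : var) (u : term).
Hypothesis es : es_sets U A z u = Some (U', A').

Lemma sets_le_es_notin U0 A0 :
  sets_le U0 A0 (hs ++ U) A -> z \notin U0 ++ A0 -> sets_le U0 A0 (hs ++ U') A'.
Proof.
move=> [s1 s2] zUA0.
split=> a; rewrite ?(mem_es_sets_A es) -?catA ?(mem_cat _ hs) ?(mem_es_sets es).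
  by move: (s1 a) zUA0; mem_solve.
by move: (s1 a) (s2 a) zUA0; mem_solve.
Qed.

Lemma sets_le_es_hole U0 A0 U1 V B :
  z \in U ++ A -> sets_le U0 A0 (hs ++ U) A -> z \notin U0 ++ A0 -> {subset U1 <= U0} ->
  sets_le V B (unT u) (anT u) -> sets_le (U1 ++ V) (A0 ++ B) (hs ++ U') A'.
Proof.
move=> zUA [s1 s2] zUA0 sU1 [t1 t2].
split=> a; rewrite ?(mem_es_sets_A es) -?catA ?(mem_cat _ hs) ?(mem_es_sets es).
  by move: (s1 a) (sU1 a) (t1 a) (@unT_sub_nvT u a) (@anT_sub_nvT u a) zUA zUA0; mem_solve.
by move: (s1 a) (s2 a) (t2 a) zUA zUA0; mem_solve.
Qed.

End EsSetsLe.

Lemma sets_le_hole_var U A U0 A0 z h U0' A0' : es_sets U0 A0 z (fvar h) = Some (U0', A0') ->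
  sets_le U0 A0 (z :: U) A -> z \notin A -> sets_le U0' A0' (h :: sdel z U) A.
Proof.
move=> es [s1 s2] zA; split=> a; rewrite ?(mem_es_sets_A es) ?(mem_es_sets es).
  by move: (s1 a) (s2 a); mem_solve.
by move: (s2 a) (s2 z) zA; mem_solve.
Qed.

Lemma Mctx_pctxES P U A z u U' A' : Mctx P U A -> z \notin pdom P ->
  es_sets U A z u = Some (U', A') -> Mctx (pctxES P z u) U' A'.
Proof.
move=> HM zP; case: es_setsP => // [zUA|y zUA ->|zUA ui|zUA uv zA] [<- <-].
- exact: M_gen.
- exact: M_var.
- exact: M_inert.
- by apply: M_val => //; move: zUA zA; mem_solve.
Qed.

Lemma Xctx_pctxES P U A z u U' A' : Xctx P U A -> z \notin pdom P ->
  es_sets U A z u = Some (U', A') -> Xctx (pctxES P z u) U' A'.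
Proof.
move=> HX zP; case: es_setsP => // [zUA|y zUA ->|zUA ui|zUA uv zA] [<- <-].
- exact: X_gen.
- exact: X_var.
- exact: X_inert.
- by apply: X_val => //; move: zUA zA; mem_solve.
Qed.

Lemma Mctx_es_ind (Q : pctx -> seq var -> seq var -> Prop) :
  (forall H, isH H -> Q (PC H [::]) (unC H) (anC H)) ->
  (forall P U A z u U' A', Mctx P U A -> Q P U A -> z \notin pdom P ->
     es_sets U A z u = Some (U', A') -> Q (pctxES P z u) U' A') ->
  (forall P U A x H, Mctx P U A -> Q P U A -> x \notin U ++ A -> isH H -> x \notin pdom P ->
     Q (progC (plugt P (fvar x)) x H) (U ++ unC H) (A ++ anC H)) ->
  forall P U A, Mctx P U A -> Q P U A.
Proof.
move=> Qbase Qes Qhole P U A; elim=> {P U A}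
  [H|P U A x y HM IH xUA|P U A x t HM IH xUA|P U A x i HM IH xUA ii|P U A x v HM IH xU xA vv|
   P U A x H HM IH].
- exact: Qbase.
- by move=> xP; apply: Qes HM IH xP (es_sets_var _ xUA).
- by move=> xP; apply: Qes HM IH xP (es_sets_notin _ xUA).
- by move=> xP; apply: Qes HM IH xP (es_sets_inert xUA ii).
- by move=> xP; apply: Qes HM IH xP (es_sets_val xU xA vv).
- exact: Qhole.
Qed.

Lemma Xctx_es_ind (Q : pctx -> seq var -> seq var -> Prop) :
  (forall H, isHapp H -> Q (PC H [::]) (unC H) (anC H)) ->
  (forall P U A x H, Mctx P U A -> x \notin U ++ A -> isHapp H -> x \notin pdom P ->
     Q (progC (plugt P (fvar x)) x H) (sdel x U ++ unC H) (A ++ anC H)) ->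
  (forall P U A z u U' A', Xctx P U A -> Q P U A -> z \notin pdom P ->
     es_sets U A z u = Some (U', A') -> Q (pctxES P z u) U' A') ->
  (forall P U A x, Xctx P U A -> Q P U A -> x \notin A -> x \notin pdom P ->
     Q (progC (plugt P (fvar x)) x Hole) (sdel x U) A) ->
  forall P U A, Xctx P U A -> Q P U A.
Proof.
move=> Qbase QholeM Qes Qhole P U A; elim=> {P U A}
  [H|P U A x H|P U A x y HX IH xUA|P U A x i HX IH xUA ii|P U A x t HX IH xUA|
   P U A x v HX IH xU xA vv|P U A x HX IH].
- exact: Qbase.
- exact: QholeM.
- by move=> xP; apply: Qes HX IH xP (es_sets_var _ xUA).
- by move=> xP; apply: Qes HX IH xP (es_sets_inert xUA ii).
- by move=> xP; apply: Qes HX IH xP (es_sets_notin _ xUA).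
- by move=> xP; apply: Qes HX IH xP (es_sets_val xU xA vv).
- exact: Qhole.
Qed.

(** * Normal forms do not reduce *)

Lemma nvP_pES p x u :
  nvP (pES p x u) = if x \in nvP p then sdel x (nvP p) ++ nvT u else nvP p.
Proof. by case: p. Qed.

Lemma unP_pES p x u : unP (pES p x u) =
  if (x \in unP p) || (x \in nvP p) && ~~ is_var u then sdel x (unP p) ++ unT u else unP p.
Proof. by case: p. Qed.

Lemma anP_pES p x u : anP (pES p x u) =
  if x \notin nvP p then anP p
  else sdel x (anP p) ++ (if is_var u then (if x \in anP p then nvT u else [::]) else anT u).
Proof. by case: p => t E; rewrite /anP /nvP /=; case: ifP => // _; case: u => //= y; case: ifP. Qed.

Lemma unP_sub_nvP p : {subset unP p <= nvP p}.
Proof.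
case: p => t E; elim: E => [|[x u] E IH] a; first exact: unT_sub_nvT.
rewrite -[unP _]/(unP (pES (t, E) x u)) -[nvP _]/(nvP (pES (t, E) x u)) unP_pES nvP_pES.
by move: (IH a) (IH x) (@unT_sub_nvT u a); mem_solve.
Qed.

Lemma anP_sub_nvP p : {subset anP p <= nvP p}.
Proof.
case: p => t E; elim: E => [|[x u] E IH] a; first exact: anT_sub_nvT.
rewrite -[anP _]/(anP (pES (t, E) x u)) -[nvP _]/(nvP (pES (t, E) x u)) anP_pES nvP_pES.
by move: (IH a) (IH x) (@anT_sub_nvT u a); mem_solve.
Qed.

Lemma nvP_pES_keep p x u a : a != x -> a \in nvP p -> a \in nvP (pES p x u).
Proof. by rewrite nvP_pES; mem_solve. Qed.

Lemma anP_pES_keep p x u a : a != x -> a \in anP p -> a \in anP (pES p x u).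
Proof. by rewrite anP_pES; mem_solve. Qed.

Lemma gvar_sets x p : gvar x p -> [/\ nvP p = [:: x], unP p = [:: x] & anP p = [::]].
Proof.
elim=> {x p} [//|x y p _ [N U A] _|x z t p _ [N U A] zx _].
  by rewrite nvP_pES unP_pES anP_pES N U A !inE eqxx /= /sdel /= eqxx.
by rewrite nvP_pES unP_pES anP_pES N U A !inE (negPf zx).
Qed.

Lemma uabs_sets p : uabs p -> nvP p = [::] /\ anP p = [::].
Proof.
elim=> {p} [v vv|x p v /gvar_sets [N _ A] vv _|x p t _ [N A] _].
- by case: v vv.
- by rewrite nvP_pES anP_pES N A inE eqxx /= /sdel /= eqxx val_nvT // val_anT //; case: v vv.
- by rewrite nvP_pES anP_pES N A.
Qed.

Lemma gvar_nil x t : gvar x (t, [::]) -> t = fvar x.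
Proof. by move Hq: (t, [::]) => q H; case: H Hq => [y [->]|*|*] //; case/pES_nil. Qed.

Lemma uabs_nil t : uabs (t, [::]) -> is_val t.
Proof. by move Hq: (t, [::]) => q H; case: H Hq => [v vv [->]|*|*] //; case/pES_nil. Qed.

Lemma uinert_nil t : uinert (t, [::]) -> is_inert_plus t.
Proof. by move Hq: (t, [::]) => q H; case: H Hq => [i ii [->]|*|*|*|*] //; case/pES_nil. Qed.

Lemma gvar_pES_inv y p x u : gvar y (pES p x u) -> (u = fvar y /\ gvar x p) \/ (gvar y p /\ x != y).
Proof.
move Hq: (pES p x u) => q H.
case: H Hq => [z /esym/pES_nil//|z w q' g _|z w t q' g wz _] /pES_inj [-> -> ->].
- by left.
- by right.
Qed.

Lemma uabs_pES_inv p x u : uabs (pES p x u) -> (gvar x p /\ is_val u) \/ uabs p.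
Proof.
move Hq: (pES p x u) => q H.
case: H Hq => [v _ /esym/pES_nil//|z q' v g vv _|z q' t a _] /pES_inj [-> -> ->].
- by left.
- by right.
Qed.

Lemma uinert_pES_inv p x u : uinert (pES p x u) ->
  [\/ gvar x p /\ is_inert_plus u, [/\ uinert p, x \in nvP p & is_inert u],
      [/\ uinert p, x \in unP p, x \notin anP p & is_val u] | uinert p /\ x \notin nvP p].
Proof.
move Hq: (pES p x u) => q H; case: H Hq => [i _ /esym/pES_nil//|z q' i g ii _|z q' i ui xN ii _|
  z q' v ui xU xA vv _|z q' t ui xN _] /pES_inj [-> -> ->]; by [constructor 1|constructor 2|
  constructor 3|constructor 4].
Qed.

Lemma unorm_pES_inv p x u : unorm (pES p x u) ->
  [/\ unorm p, x \in nvP p -> is_val u || is_inert u & x \in anP p -> ~~ is_val u].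
Proof.
rewrite /unorm; case=> [/uinert_pES_inv|[/uabs_pES_inv|[y /gvar_pES_inv]]].
- case=> [[g /inert_plus_inert ii]|[ui xN ii]|[ui xU xA uv]|[ui xN]].
  + by have [_ _ ->] := gvar_sets g; split=> //; [right; right; exists x|rewrite ii orbT].
  + by split; [left|rewrite ii orbT|rewrite inert_not_val].
  + by split; [left|rewrite uv|move=> xA'; rewrite xA' in xA].
  + by split; [left|move=> xN'; rewrite xN' in xN|move/anP_sub_nvP => xN'; rewrite xN' in xN].
- case=> [[g uv]|ua].
  + by have [_ _ ->] := gvar_sets g; split=> //; [right; right; exists x|rewrite uv].
  + by have [-> ->] := uabs_sets ua; split=> //; right; left.
- case=> [[-> g]|[g xy]]; first by split=> //; right; right; exists x.
  have [-> _ ->] := gvar_sets g; split=> //; first by right; right; exists y.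
  by rewrite inE (negPf xy).
Qed.

Lemma unorm_nil t : unorm (t, [::]) -> is_val t || is_inert t.
Proof.
by case=> [/uinert_nil/inert_plus_inert->|[/uabs_nil->|[y /gvar_nil->]]]; rewrite ?orbT.
Qed.

Lemma Mctx_hole_needed P U A y : Mctx P U A -> y \notin pdom P -> y \in nvP (plugt P (fvar y)).
Proof.
move=> HM; elim/Mctx_es_ind: P U A / HM y => [H _|P U A z u U' A' _ IH _ _|P U A x H _ IH _ _ xP] y.
- by move=> _; apply: nvT_plug_hole.
- rewrite pdom_pctxES inE negb_or plugt_pctxES => /andP[yz /IH]; exact: nvP_pES_keep.
- by move=> _; rewrite plugt_progC nvP_pES (IH x xP) mem_cat nvT_plug_hole orbT.
Qed.

Lemma Xctx_hole_applied P U A y : Xctx P U A -> y \notin pdom P -> y \in anP (plugt P (fvar y)).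
Proof.
move=> HX; elim/Xctx_es_ind: P U A / HX y =>
  [H HH|P U A x H HM _ HH xP|P U A z u U' A' _ IH _ _|P U A x _ IH _ xP] y.
- by move=> _; apply: anT_plug_app_hole.
- move=> _; have [a [b E]] := isHapp_app (fvar y) HH; have := anT_plug_app_hole y HH.
  by rewrite plugt_progC anP_pES (Mctx_hole_needed HM xP) E /= mem_cat => ->; rewrite orbT.
- rewrite pdom_pctxES inE negb_or plugt_pctxES => /andP[yz /IH]; exact: anP_pES_keep.
- move=> _; have xA := IH x xP; have xN := anP_sub_nvP xA.
  by rewrite plugt_progC anP_pES xN xA /= mem_cat inE eqxx orbT.
Qed.

Lemma Mctx_unorm_fireball P U A s : Mctx P U A -> unorm (plugt P s) -> is_val s || is_inert s.
Proof.
move=> HM; elim/Mctx_es_ind: P U A / HM s =>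
  [H HH|P U A z u U' A' _ IH _ _|P U A x H HM _ _ HH xP] s.
- by move/unorm_nil; apply: Hctx_plug_fireball.
- by rewrite plugt_pctxES => /unorm_pES_inv[/IH].
- rewrite plugt_progC => /unorm_pES_inv[_ /(_ (Mctx_hole_needed HM xP)) Hf _].
  exact: Hctx_plug_fireball HH Hf.
Qed.

Lemma lookup_progC_unscoped p x H y v :
  lookup (progC p x H) y v -> ~~ scoped (plugt (progC p x H) (fvar y)).2.
Proof.
case: p => t E /= [yE|//]; apply/negP => /andP[/andP[_ /allP/(_ y (In_map_fst yE))]].
by rewrite fv_plug_hole.
Qed.

Lemma Xctx_lookup_not_unorm P U A y v : Xctx P U A -> lookup P y v -> is_val v ->
  scoped (plugt P (fvar y)).2 -> ~ unorm (plugt P (fvar y)).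
Proof.
elim/Xctx_es_ind=> {P U A} [//|P U A x H _ _ _ _|P U A z u U' A' HX IH zP _|P U A x _ _ _ _];
  try by move=> /lookup_progC_unscoped/negP.
move=> /lookup_pctxES[[-> ->] vv _|yv vv]; rewrite plugt_pctxES.
  by case/unorm_pES_inv=> _ _ /(_ (Xctx_hole_applied HX zP)); rewrite vv.
by case: (plugt P (fvar y)) (IH yv vv) => t E IH' /andP[_ /IH' IH''] /unorm_pES_inv[].
Qed.

(** * Re-rooting contexts at a needed variable *)

(* [Mrooted p U A x]: [p] is [P<x>] for some [P] in M_{U0,A0} with [x] not in [U0 ++ A0], so
   that M_hole and X_holeM can turn an ES on [x] into the hole; [Xrooted] is the analogue for
   X_{U0,A0} with [x] not in [A0], as X_hole requires.  The bound of [(U0, A0)] by [(U, A)] is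
   the invariant that keeps the re-rooting inductions going. *)
Definition Mrooted (p : prog) (U A : seq var) (x : var) := exists P0 U0 A0,
  [/\ Mctx P0 U0 A0, plugt P0 (fvar x) = p, x \notin U0 ++ A0 & sets_le U0 A0 U A].

Definition Xrooted (p : prog) (U A : seq var) (x : var) := exists P0 U0 A0,
  [/\ Xctx P0 U0 A0, plugt P0 (fvar x) = p, x \notin A0 & sets_le U0 A0 U A].

Lemma Mrooted_le p U A U' A' x : sets_le U A U' A' -> Mrooted p U A x -> Mrooted p U' A' x.
Proof.
by move=> le [P0 [U0 [A0 [HM E xUA le0]]]]; exists P0, U0, A0; split=> //; apply: sets_le_trans le.
Qed.

Lemma Xrooted_le p U A U' A' x : sets_le U A U' A' -> Xrooted p U A x -> Xrooted p U' A' x.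
Proof.
by move=> le [P0 [U0 [A0 [HX E xA le0]]]]; exists P0, U0, A0; split=> //; apply: sets_le_trans le.
Qed.

(* [hs] lists the variables besides [U ++ A] that may be needed in the rooted contexts: the
   variable substituted by an exponential step is one of them. *)
Section RootedES.
Variables (hs : seq var) (p : prog) (U A U' A' : seq var) (z x : var) (u : term).
Hypotheses (es : es_sets U A z u = Some (U', A')) (zp : z \notin dom p).

Lemma Mrooted_pES_append : x \in U ++ A -> ~~ ((z \in U ++ A) && (x \in nvT u)) ->
  (z \in hs -> z \notin U ++ A -> is_val u) -> Mrooted p (hs ++ U) A x ->
  Mrooted (pES p z u) (hs ++ U') A' x.
Proof.
move=> xUA plain zval [P0 [U0 [A0 [HM0 E0 xUA0 [le1 le2]]]]].
have zval0 : z \in U0 ++ A0 -> z \notin U ++ A -> is_val u.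
  by move=> /le1; rewrite -catA mem_cat => /orP[/zval//|->].
have [U0' [A0' [es0 le0']]] := es_sets_mono es (conj le1 le2) zval0.
exists (pctxES P0 z u), U0', A0'; split=> //.
- by apply: Mctx_pctxES HM0 _ es0; rewrite (plugt_pdom E0).
- by rewrite plugt_pctxES E0.
- rewrite (mem_es_sets es0) (negPf xUA0) andbF /=; apply/andP=> -[zUA0 xu].
  have [zUA|zUA] := boolP (z \in U ++ A); first by rewrite zUA xu in plain.
  by rewrite val_nvT ?zval0 in xu.
Qed.

Lemma Mrooted_pES_hole : z \in U ++ A -> x \in nvT u -> Mrooted p (hs ++ U) A z ->
  (forall P0 U0 A0, Mctx P0 U0 A0 -> pdom P0 = dom p -> x \in U0 ++ A0 ->
     Mrooted (plugt P0 (fvar z)) U0 A0 x) ->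
  Mrooted (pES p z u) (hs ++ U') A' x.
Proof.
move=> zUA xu [P0 [U0 [A0 [HM0 E0 zUA0 le0]]]] reroot.
have P0p := plugt_pdom E0; have zP0 : z \notin pdom P0 by rewrite P0p.
have [xUA0|xUA0] := boolP (x \in U0 ++ A0).
  have [P2 [U2 [A2 [HM2 E2 xUA2 le2]]]] := reroot P0 U0 A0 HM0 P0p xUA0.
  have zUA2 : z \notin U2 ++ A2 by apply: contra zUA0; case: le2 => + _; apply.
  exists (pctxES P2 z u), U2, A2; split=> //.
  - by apply: Mctx_pctxES HM2 _ (es_sets_notin _ zUA2); rewrite (plugt_pdom E2) dom_plugt.
  - by rewrite plugt_pctxES E2 E0.
  - exact: sets_le_trans le2 (sets_le_es_notin es le0 zUA0).
have ui : is_inert u.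
  move: (es_sets_needed_shape es zUA); case/or3P=> [|/inert_plus_inert//|/andP[/val_nvT uv _]].
    by case: (u).
  by rewrite uv in xu.
have [H [HH Hu xH leH]] := inert_hole_at ui xu.
exists (progC (plugt P0 (fvar z)) z H), (U0 ++ unC H), (A0 ++ anC H); split.
- exact: M_hole.
- by rewrite plugt_progC Hu E0.
- by move: xUA0 xH; mem_solve.
- exact: (sets_le_es_hole (U1 := U0) es zUA le0 zUA0 (fun _ => id) leH).
Qed.

Lemma Mrooted_pES : x != z -> (z \in hs -> z \notin U ++ A -> is_val u) ->
  (x \in U ++ A -> Mrooted p (hs ++ U) A x) ->
  (z \in U ++ A -> x \in nvT u -> Mrooted p (hs ++ U) A z) ->
  (forall P0 U0 A0, Mctx P0 U0 A0 -> pdom P0 = dom p -> x \in U0 ++ A0 ->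
     Mrooted (plugt P0 (fvar z)) U0 A0 x) ->
  x \in U' ++ A' -> Mrooted (pES p z u) (hs ++ U') A' x.
Proof.
move=> xz zval IHx IHz reroot; rewrite (mem_es_sets es) xz /=.
have [/andP[zUA xu] _|plain] := boolP ((z \in U ++ A) && (x \in nvT u)).
  exact: Mrooted_pES_hole (IHz zUA xu) reroot.
by rewrite orbF => xUA; apply: Mrooted_pES_append (IHx xUA).
Qed.

Lemma Xrooted_pES_append : x \in A -> ~~ ((z \in A) && is_var u && (x \in nvT u)) ->
  ~~ ((z \in U ++ A) && (x \in anT u)) -> (z \in hs -> z \notin U ++ A -> is_val u) ->
  Xrooted p (hs ++ U) A x -> Xrooted (pES p z u) (hs ++ U') A' x.
Proof.
move=> xA vplain iplain zval [P0 [U0 [A0 [HX0 E0 xA0 [le1 le2]]]]].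
have zval0 : z \in U0 ++ A0 -> z \notin U ++ A -> is_val u.
  by move=> /le1; rewrite -catA mem_cat => /orP[/zval//|->].
have [U0' [A0' [es0 le0']]] := es_sets_mono es (conj le1 le2) zval0.
exists (pctxES P0 z u), U0', A0'; split=> //.
- by apply: Xctx_pctxES HX0 _ es0; rewrite (plugt_pdom E0).
- by rewrite plugt_pctxES E0.
- rewrite (mem_es_sets_A es0) (negPf xA0) andbF /=; apply/norP; split.
    by apply: contra vplain => /andP[/andP[/le2 ->]] -> ->.
  apply/andP=> -[zUA0 xu]; have [zUA|zUA] := boolP (z \in U ++ A).
    by rewrite zUA xu in iplain.
  by rewrite val_anT ?zval0 in xu.
Qed.

Lemma Xrooted_pES_var : z \in A -> u = fvar x -> Xrooted p (hs ++ U) A z ->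
  (forall P0 U0 A0, Xctx P0 U0 A0 -> pdom P0 = dom p -> x \in A0 ->
     Xrooted (plugt P0 (fvar z)) (z :: U0) A0 x) ->
  Xrooted (pES p z u) (hs ++ U') A' x.
Proof.
move=> zA ux [P0 [U0 [A0 [HX0 E0 zA0 le0]]]] reroot.
have zUA : z \in U ++ A by rewrite mem_cat zA orbT.
have P0p := plugt_pdom E0; have zP0 : z \notin pdom P0 by rewrite P0p.
have [xA0|xA0] := boolP (x \in A0); last first.
  exists (progC (plugt P0 (fvar z)) z Hole), (sdel z U0), A0; split=> //.
  - exact: X_hole.
  - by rewrite plugt_progC E0 ux.
  - apply: (sets_le_es_notin es); first exact: sets_le_sdel.
    by rewrite mem_cat mem_sdel eqxx.
have [P2 [U2 [A2 [HX2 E2 xA2 le2]]]] := reroot P0 U0 A0 HX0 P0p xA0.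
have le2' : sets_le U2 A2 (hs ++ U) A.
  by case: le0 le2 => [s1 s2] [t1 t2]; split=> a; move: (s1 a) (s2 a) (t1 a) (t2 a) zUA; mem_solve.
have [U2' [A2' [es2 le2'']]] : exists U2' A2', es_sets U2 A2 z u = Some (U2', A2') /\
  sets_le U2' A2' (hs ++ U') A' by apply: es_sets_mono es le2' _; rewrite zUA.
exists (pctxES P2 z u), U2', A2'; split=> //.
- by apply: Xctx_pctxES HX2 _ es2; rewrite (plugt_pdom E2) dom_plugt.
- by rewrite plugt_pctxES E2 E0.
- have zA2 : z \notin A2 by apply: contra zA0; case: le2 => _; apply.
  by rewrite (mem_es_sets_A es2) (negPf xA2) (negPf zA2) ux in_nil !andbF.
Qed.

Lemma Xrooted_pES_hole : z \in U ++ A -> x \in anT u -> Mrooted p (hs ++ U) A z ->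
  (forall P0 U0 A0, Mctx P0 U0 A0 -> pdom P0 = dom p -> x \in A0 ->
     Xrooted (plugt P0 (fvar z)) U0 A0 x) ->
  Xrooted (pES p z u) (hs ++ U') A' x.
Proof.
move=> zUA xu [P0 [U0 [A0 [HM0 E0 zUA0 le0]]]] reroot.
have ui : is_inert_plus u.
  move: (es_sets_needed_shape es zUA); case/or3P=> [uv|//|/andP[/val_anT uv _]].
    by rewrite var_anT in xu.
  by rewrite uv in xu.
have P0p := plugt_pdom E0; have zP0 : z \notin pdom P0 by rewrite P0p.
have [xA0|xA0] := boolP (x \in A0).
  have [P2 [U2 [A2 [HX2 E2 xA2 le2]]]] := reroot P0 U0 A0 HM0 P0p xA0.
  have zUA2 : z \notin U2 ++ A2 by apply: contra zUA0; case: le2 => + _; apply.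
  exists (pctxES P2 z u), U2, A2; split=> //.
  - by apply: Xctx_pctxES HX2 _ (es_sets_notin _ zUA2); rewrite (plugt_pdom E2) dom_plugt.
  - by rewrite plugt_pctxES E2 E0.
  - exact: sets_le_trans le2 (sets_le_es_notin es le0 zUA0).
have [H [HH Hu xH leH]] := inert_app_hole_at (inert_plus_inert ui) xu.
exists (progC (plugt P0 (fvar z)) z H), (sdel z U0 ++ unC H), (A0 ++ anC H); split.
- exact: X_holeM.
- by rewrite plugt_progC Hu E0.
- by move: xA0 xH; mem_solve.
- apply: (sets_le_es_hole es zUA le0 zUA0 _ leH) => a.
  by rewrite mem_sdel => /andP[].
Qed.

Lemma Xrooted_pES : x != z -> (z \in hs -> z \notin U ++ A -> is_val u) ->
  (x \in A -> Xrooted p (hs ++ U) A x) ->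
  (z \in U ++ A -> x \in anT u -> Mrooted p (hs ++ U) A z) ->
  (z \in A -> u = fvar x -> Xrooted p (hs ++ U) A z) ->
  (forall P0 U0 A0, Mctx P0 U0 A0 -> pdom P0 = dom p -> x \in A0 ->
     Xrooted (plugt P0 (fvar z)) U0 A0 x) ->
  (forall P0 U0 A0, Xctx P0 U0 A0 -> pdom P0 = dom p -> x \in A0 ->
     Xrooted (plugt P0 (fvar z)) (z :: U0) A0 x) ->
  x \in A' -> Xrooted (pES p z u) (hs ++ U') A' x.
Proof.
move=> xz zval IHx IHzM IHzX rerootM rerootX; rewrite (mem_es_sets_A es) xz /=.
have [/andP[/andP[zA uv] xu] _|vplain] := boolP ((z \in A) && is_var u && (x \in nvT u)).
  by have ux := var_nvT uv xu; apply: Xrooted_pES_var (IHzX zA ux) rerootX.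
have [/andP[zUA xu] _|iplain] := boolP ((z \in U ++ A) && (x \in anT u)).
  exact: Xrooted_pES_hole (IHzM zUA xu) rerootM.
by rewrite /= orbF => xA; apply: Xrooted_pES_append (IHx xA).
Qed.

End RootedES.

Lemma Mrooted_pES_fvar p U A z h x : z \notin A -> z \notin dom p -> x != h ->
  Mrooted p (z :: U) A x -> Mrooted (pES p z (fvar h)) (h :: sdel z U) A x.
Proof.
move=> zA zp xh [P0 [U0 [A0 [HM0 E0 xUA0 le0]]]].
have [U0' [A0' es]] := es_sets_fvar_some U0 A0 z h.
exists (pctxES P0 z (fvar h)), U0', A0'; split.
- by apply: Mctx_pctxES HM0 _ es; rewrite (plugt_pdom E0).
- by rewrite plugt_pctxES E0.
- by rewrite (mem_es_sets es) (negPf xUA0) andbF inE (negPf xh) andbF.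
- exact: sets_le_hole_var es le0 zA.
Qed.

Lemma Xrooted_pES_fvar p U A z h x : z \notin A -> z \notin dom p -> x != h ->
  Xrooted p (z :: U) A x -> Xrooted (pES p z (fvar h)) (h :: sdel z U) A x.
Proof.
move=> zA zp xh [P0 [U0 [A0 [HX0 E0 xA0 le0]]]].
have [U0' [A0' es]] := es_sets_fvar_some U0 A0 z h.
exists (pctxES P0 z (fvar h)), U0', A0'; split.
- by apply: Xctx_pctxES HX0 _ es; rewrite (plugt_pdom E0).
- by rewrite plugt_pctxES E0.
- by rewrite (mem_es_sets_A es) (negPf xA0) andbF /= inE (negPf xh) !andbF.
- exact: sets_le_hole_var es le0 zA.
Qed.

Lemma Mrooted_hole P U A y H s x : Mctx P U A -> y \notin U ++ A -> isH H -> y \notin pdom P ->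
  (x \in U ++ A -> Mrooted (plugt P (fvar y)) U A x) -> x \in (U ++ unC H) ++ (A ++ anC H) ->
  Mrooted (pES (plugt P (fvar y)) y (plugT H s)) (U ++ unC H) (A ++ anC H) x.
Proof.
move=> HM yUA HH yP IH; have [xUA _|xUA xUAH] := boolP (x \in U ++ A).
  have [P0 [U0 [A0 [HM0 E0 xUA0 le0]]]] := IH xUA.
  have yUA0 : y \notin U0 ++ A0 by apply: contra yUA; case: le0 => + _; apply.
  exists (pctxES P0 y (plugT H s)), U0, A0; split=> //.
  - by apply: Mctx_pctxES HM0 _ (es_sets_notin _ yUA0); rewrite (plugt_pdom E0) dom_plugt.
  - by rewrite plugt_pctxES E0.
  - exact: sets_le_catr.
have [|H0 [HH0 E0 xH0 le0]] := Hctx_hole_at s HH (x := x); first by move: xUAH xUA; mem_solve.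
exists (progC (plugt P (fvar y)) y H0), (U ++ unC H0), (A ++ anC H0); split.
- exact: M_hole.
- by rewrite plugt_progC E0.
- by move: xUA xH0; mem_solve.
- exact: sets_le_cat.
Qed.

Lemma Xrooted_hole P U A y H s x : Mctx P U A -> y \notin U ++ A -> isH H -> y \notin pdom P ->
  (x \in A -> Xrooted (plugt P (fvar y)) U A x) -> x \in A ++ anC H ->
  Xrooted (pES (plugt P (fvar y)) y (plugT H s)) (U ++ unC H) (A ++ anC H) x.
Proof.
move=> HM yUA HH yP IH; have [xA _|xA xAH] := boolP (x \in A).
  have [P0 [U0 [A0 [HX0 E0 xA0 le0]]]] := IH xA.
  have yUA0 : y \notin U0 ++ A0 by apply: contra yUA; case: le0 => + _; apply.
  exists (pctxES P0 y (plugT H s)), U0, A0; split=> //.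
  - by apply: Xctx_pctxES HX0 _ (es_sets_notin _ yUA0); rewrite (plugt_pdom E0) dom_plugt.
  - by rewrite plugt_pctxES E0.
  - exact: sets_le_catr.
have [|H0 [HH0 E0 xH0 [le1 le2]]] := Hctx_app_hole_at s HH (x := x).
  by move: xAH xA; mem_solve.
exists (progC (plugt P (fvar y)) y H0), (sdel y U ++ unC H0), (A ++ anC H0); split.
- exact: X_holeM.
- by rewrite plugt_progC E0.
- by move: xA xH0; mem_solve.
- by split=> a; move: (le1 a) (le2 a); mem_solve.
Qed.

Lemma Mctx_Mrooted P U A s x :
  Mctx P U A -> x \in U ++ A -> x \notin pdom P -> Mrooted (plugt P s) U A x.
Proof.
have [n] := ubnP (size (pdom P)); elim: n => // n IHn in P U A s x *; rewrite ltnS => Pn HM.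
move: Pn; elim/Mctx_es_ind: P U A / HM s x =>
  [H HH|P U A z u U' A' HM _ zP es|P U A y H HM _ yUA HH yP] s x Pn xUA xP.
- have [H0 [HH0 E xH0 le]] := Hctx_hole_at s HH xUA.
  by exists (PC H0 [::]), (unC H0), (anC H0); split=> //; [apply: M_base | rewrite /= E].
- move: xP Pn; rewrite pdom_pctxES inE negb_or => /andP[xz xP] Pn.
  rewrite plugt_pctxES; apply: (Mrooted_pES (hs := [::]) es); rewrite ?dom_plugt //.
  + by move=> xUA'; apply: IHn.
  + by move=> zUA' _; apply: IHn.
  + by move=> P0 U0 A0 HM0 P0p xUA0; apply: IHn; rewrite ?P0p ?dom_plugt.
- move: xP Pn; rewrite pdom_progC inE negb_or dom_plugt => /andP[xy xP] Pn.
  rewrite plugt_progC; apply: Mrooted_hole => // xUA'; exact: IHn.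
Qed.

Lemma Xctx_Mrooted P U A h x : Xctx P U A -> val_lookup P h -> x \in U ++ A -> x \notin pdom P ->
  x != h -> Mrooted (plugt P (fvar h)) (h :: U) A x.
Proof.
move=> HX; elim/Xctx_es_ind: P U A / HX h x =>
  [H HH|P U A y H HM yUA HH yP|P U A z u U' A' HX IH zP es|P U A z HX IH zA zP] h x hv xUA xP xh.
- have [H0 [HH0 E xH0 le]] := Hctx_hole_at (fvar h) (isHapp_isH HH) xUA.
  exists (PC H0 [::]), (unC H0), (anC H0); split=> //; first exact: M_base.
    by rewrite /= E.
  exact: sets_le_trans le (sets_le_cons _ _ _).
- move: xP; rewrite pdom_progC inE negb_or dom_plugt => /andP[xy xP].
  rewrite plugt_progC; apply: Mrooted_le (Mrooted_hole _ HM yUA (isHapp_isH HH) yP _ _).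
  + by split=> a; move: yUA; mem_solve.
  + by move=> xUA'; apply: Mctx_Mrooted.
  + by move: xUA; mem_solve.
- move: xP; rewrite pdom_pctxES inE negb_or => /andP[xz xP].
  rewrite plugt_pctxES; apply: (Mrooted_pES (hs := [:: h]) es); rewrite ?dom_plugt //.
  + by rewrite inE => /eqP/(val_lookup_new hv).
  + by move=> xUA'; apply: IH => //; apply: val_lookup_pctxES hv.
  + move=> zUA xu; apply: IH => //; first exact: val_lookup_pctxES hv.
    apply/eqP=> /(val_lookup_new hv) /val_nvT uv; by rewrite uv in xu.
  + by move=> P0 U0 A0 HM0 P0p xUA0; apply: Mctx_Mrooted; rewrite ?P0p ?dom_plugt.
- move: xP; rewrite pdom_progC inE negb_or dom_plugt => /andP[xz xP].
  rewrite plugt_progC [plugT _ _]/=.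
  apply: (Mrooted_pES_fvar (p := plugt P (fvar z)) (U := U) zA); rewrite ?dom_plugt //.
  by apply: IH xP xz; [apply: val_lookup_notin | move: xUA; mem_solve].
Qed.

(* Strong induction on the size of the domain: a re-rooted context has the same domain as
   the one it replaces, not a smaller one. *)
Definition Mctx_Xrooted_below n := forall P U A s x, size (pdom P) < n ->
  Mctx P U A -> x \in A -> x \notin pdom P -> Xrooted (plugt P s) U A x.

Definition Xctx_Xrooted_below n := forall P U A h x, size (pdom P) < n ->
  Xctx P U A -> val_lookup P h -> x \in A -> x \notin pdom P -> x != h ->
  Xrooted (plugt P (fvar h)) (h :: U) A x.

Lemma Mctx_Xrooted_step n :
  Mctx_Xrooted_below n -> Xctx_Xrooted_below n -> Mctx_Xrooted_below n.+1.
Proof.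
move=> IHM IHX P U A s x; rewrite ltnS => Pn HM; move: Pn.
elim/Mctx_es_ind: P U A / HM s x => [H HH|P U A z u U' A' HM _ zP es|P U A y H HM _ yUA HH yP]
  s x Pn xA xP.
- have [H0 [HH0 E xH0 le]] := Hctx_app_hole_at s HH xA.
  by exists (PC H0 [::]), (unC H0), (anC H0); split=> //; [apply: X_base | rewrite /= E].
- move: xP Pn; rewrite pdom_pctxES inE negb_or => /andP[xz xP] Pn.
  rewrite plugt_pctxES; apply: (Xrooted_pES (hs := [::]) es); rewrite ?dom_plugt //.
  + by move=> xA'; apply: IHM.
  + by move=> zUA _; apply: Mctx_Mrooted.
  + by move=> zA _; apply: IHM.
  + by move=> P0 U0 A0 HM0 P0p xA0; apply: IHM; rewrite ?P0p ?dom_plugt.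
  + move=> P0 U0 A0 HX0 P0p xA0; apply: IHX; rewrite ?P0p ?dom_plugt //.
    by apply: val_lookup_notin; rewrite P0p.
- move: xP Pn; rewrite pdom_progC inE negb_or dom_plugt => /andP[xy xP] Pn.
  rewrite plugt_progC; apply: Xrooted_hole => // xA'; exact: IHM.
Qed.

Lemma Xctx_Xrooted_step n :
  Mctx_Xrooted_below n -> Xctx_Xrooted_below n -> Xctx_Xrooted_below n.+1.
Proof.
move=> IHM IHX P U A h x; rewrite ltnS => Pn HX; move: Pn.
elim/Xctx_es_ind: P U A / HX h x =>
  [H HH|P U A y H HM yUA HH yP|P U A z u U' A' HX _ zP es|P U A z HX _ zA zP] h x Pn hv xA xP xh.
- have [H0 [HH0 E xH0 le]] := Hctx_app_hole_at (fvar h) (isHapp_isH HH) xA.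
  exists (PC H0 [::]), (unC H0), (anC H0); split=> //; first exact: X_base.
    by rewrite /= E.
  exact: sets_le_trans le (sets_le_cons _ _ _).
- move: xP Pn; rewrite pdom_progC inE negb_or dom_plugt => /andP[xy xP] Pn.
  rewrite plugt_progC; apply: Xrooted_le (Xrooted_hole _ HM yUA (isHapp_isH HH) yP _ xA).
    by split=> a; move: yUA; mem_solve.
  by move=> xA'; apply: IHM.
- move: xP Pn; rewrite pdom_pctxES inE negb_or => /andP[xz xP] Pn.
  have hv' := val_lookup_pctxES hv.
  have zh : ~~ is_val u -> z != h by apply: contra => /eqP/(val_lookup_new hv).
  rewrite plugt_pctxES; apply: (Xrooted_pES (hs := [:: h]) es); rewrite ?dom_plugt //.
  + by rewrite inE => /eqP/(val_lookup_new hv).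
  + by move=> xA'; apply: IHX.
  + move=> zUA xu; apply: Xctx_Mrooted => //; apply: zh.
    by apply: contraTN xu => /val_anT ->.
  + by move=> zA' ux; apply: IHX => //; apply: zh; rewrite ux.
  + by move=> P0 U0 A0 HM0 P0p xA0; apply: IHM; rewrite ?P0p ?dom_plugt.
  + move=> P0 U0 A0 HX0 P0p xA0; apply: IHX; rewrite ?P0p ?dom_plugt //.
    by apply: val_lookup_notin; rewrite P0p.
- move: xP Pn; rewrite pdom_progC inE negb_or dom_plugt => /andP[xz xP] Pn.
  rewrite plugt_progC [plugT _ _]/=.
  apply: (Xrooted_pES_fvar (p := plugt P (fvar z)) (U := U) zA); rewrite ?dom_plugt //.
  by apply: IHX xP xz => //; apply: val_lookup_notin.
Qed.

Lemma Xrooted_below n : Mctx_Xrooted_below n /\ Xctx_Xrooted_below n.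
Proof.
elim: n => [|n [IHM IHX]]; first by split.
by split; [apply: Mctx_Xrooted_step | apply: Xctx_Xrooted_step].
Qed.

Lemma Mctx_Xrooted P U A s x :
  Mctx P U A -> x \in A -> x \notin pdom P -> Xrooted (plugt P s) U A x.
Proof. exact: (Xrooted_below (size (pdom P)).+1).1. Qed.

Lemma Xctx_Xrooted P U A h x : Xctx P U A -> val_lookup P h -> x \in A -> x \notin pdom P ->
  x != h -> Xrooted (plugt P (fvar h)) (h :: U) A x.
Proof. exact: (Xrooted_below (size (pdom P)).+1).2. Qed.

Definition needed_rooted (p : prog) := [/\ {subset nvP p <= unP p ++ anP p},
  forall x, x \in nvP p -> x \notin dom p -> Mrooted p (unP p) (anP p) x &
  forall x, x \in anP p -> x \notin dom p -> Xrooted p (unP p) (anP p) x].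

Lemma mem_es_sets_prog p z u U' A' x : {subset nvP p <= unP p ++ anP p} ->
  es_sets (unP p) (anP p) z u = Some (U', A') ->
  (x \in U' ++ A') = (x \in unP (pES p z u) ++ anP (pES p z u)) /\
  (x \in A') = (x \in anP (pES p z u)).
Proof.
move=> sub es; rewrite unP_pES anP_pES.
move: es; case: es_setsP => // [zUA|y zUA ->|zUA ui|zUA uv zA] [<- <-]; split;
  move: (sub x) (sub z) (@unP_sub_nvP p x) (@unP_sub_nvP p z) (@anP_sub_nvP p x) (@anP_sub_nvP p z).
1-4: by move: zUA; mem_solve.
1-2: have nv : ~~ is_var u by case: (u) ui.
1-2: by move: zUA nv; mem_solve.
1-2: by move: zUA zA; case: (u) uv => // t _; mem_solve.
Qed.

Lemma needed_rooted_pES q z u U' A' : needed_rooted q -> z \notin dom q ->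
  es_sets (unP q) (anP q) z u = Some (U', A') -> needed_rooted (pES q z u).
Proof.
move=> [sub rM rX] zq es; have E x := mem_es_sets_prog x sub es.
have le : sets_le U' A' (unP (pES q z u)) (anP (pES q z u)) by split=> a; rewrite ?(E a).1 ?(E a).2.
have UAN a : a \in unP q ++ anP q -> a \in nvP q.
  by rewrite mem_cat => /orP[/unP_sub_nvP|/anP_sub_nvP].
have sub' : {subset nvP (pES q z u) <= unP (pES q z u) ++ anP (pES q z u)}.
  move=> a; rewrite -(E a).1 (mem_es_sets es) nvP_pES.
  by move: (sub a) (sub z) (UAN a) (UAN z); mem_solve.
split=> // x; rewrite dom_pES inE negb_or => xN /andP[xz xq].
  apply: Mrooted_le le (Mrooted_pES (hs := [::]) es zq xz _ _ _ _ _) => //.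
  - by move=> /UAN /rM; apply.
  - by move=> /UAN /rM zUA _; apply: zUA.
  - by move=> P0 U0 A0 HM0 P0p xUA0; apply: Mctx_Mrooted; rewrite // P0p.
  - by rewrite (E x).1; apply: sub'.
apply: Xrooted_le le (Xrooted_pES (hs := [::]) es zq xz _ _ _ _ _ _ _) => //.
- by move=> /rX; apply.
- by move=> /UAN /rM zUA _; apply: zUA.
- by move=> /rX zA _; apply: zA.
- by move=> P0 U0 A0 HM0 P0p xA0; apply: Mctx_Xrooted; rewrite // P0p.
- move=> P0 U0 A0 HX0 P0p xA0; apply: Xctx_Xrooted; rewrite ?P0p //.
  by apply: val_lookup_notin; rewrite P0p.
- by rewrite (E x).2.
Qed.

Lemma gvar_Mctx x p : gvar x p -> exists P, Mctx P [::] [::] /\ plugt P (fvar x) = p.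
Proof.
elim=> {x p} [x|x y p _ [P [HM E]] xp|x z t p _ [P [HM E]] _ zp].
- by exists (PC Hole [::]); split=> //; apply: (@M_base Hole).
- exists (progC (plugt P (fvar x)) x Hole); split; last by rewrite plugt_progC E.
  by apply: (@M_hole P [::] [::] x Hole) => //; rewrite (plugt_pdom E).
- exists (pctxES P z t); split; last by rewrite plugt_pctxES E.
  by apply: M_gen => //; rewrite (plugt_pdom E).
Qed.

Lemma gvar_needed_rooted x p : gvar x p -> needed_rooted p.
Proof.
move=> g; rewrite /needed_rooted; have [-> -> ->] := gvar_sets g; have [P [HM E]] := gvar_Mctx g.
split=> // y; rewrite inE => /eqP-> _.
by exists P, [::], [::]; split=> //; split.
Qed.

Lemma inert_needed_rooted i : is_inert_plus i -> needed_rooted (i, [::]).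
Proof.
move=> /inert_plus_inert ii; split=> [|x xi _|x xi _]; first exact: inert_nvT_sub.
  have [H [HH E xH le]] := inert_hole_at ii xi.
  by exists (PC H [::]), (unC H), (anC H); split=> //; [apply: M_base | rewrite /= E].
have [H [HH E xH le]] := inert_app_hole_at ii xi.
by exists (PC H [::]), (unC H), (anC H); split=> //; [apply: X_base | rewrite /= E].
Qed.

Lemma uinert_needed_rooted p : uinert p -> needed_rooted p.
Proof.
elim=> {p} [i ii|x q i g ii xq|x q i _ IH xN ii xq|x q v _ IH xU xA vv xq|x q t _ IH xN xq].
- exact: inert_needed_rooted.
- have [_ U A] := gvar_sets g.
  apply: needed_rooted_pES (gvar_needed_rooted g) xq _.
  by rewrite U A es_sets_inert // inE.
- case: IH => sub rM rX; have [U' [A' es]] := es_sets_inert_some (sub x xN) ii.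
  exact: needed_rooted_pES es.
- exact: needed_rooted_pES IH xq (es_sets_val xU xA vv).
- apply: needed_rooted_pES IH xq (es_sets_notin _ _).
  by apply: contra xN; rewrite mem_cat => /orP[/unP_sub_nvP|/anP_sub_nvP].
Qed.

Lemma uinert_pES_es_sets q z u U' A' : uinert q -> {subset nvP q <= unP q ++ anP q} ->
  z \notin dom q -> es_sets (unP q) (anP q) z u = Some (U', A') -> uinert (pES q z u).
Proof.
move=> ui sub zq; case: es_setsP => // [zUA|y zUA ->|zUA uip|zUA uv zA] _.
- apply: uinert_skip => //; apply: contra zUA; exact: sub.
- by apply: uinert_inert => //; move: zUA; rewrite mem_cat => /orP[/unP_sub_nvP|/anP_sub_nvP].
- apply: uinert_inert => //; last exact: inert_plus_inert.
  by move: zUA; rewrite mem_cat => /orP[/unP_sub_nvP|/anP_sub_nvP].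
- by apply: uinert_val => //; move: zUA zA; mem_solve.
Qed.

(** * Programs that are not normal reduce *)

Definition Mredex (p : prog) := exists P U A t u, Mctx P U A /\ p = plugt P (app (lam t) u).

Definition Xredex (p : prog) := exists P U A h v,
  [/\ Xctx P U A, p = plugt P (fvar h), lookup P h v & is_val v].

Lemma redex_pES_needed q x u U A U1 A1 U2 A2 :
  es_sets U A x u = None -> lc u -> x \notin dom q ->
  (x \in U ++ A -> Mrooted q U1 A1 x) -> (x \in A -> Xrooted q U2 A2 x) ->
  Mredex (pES q x u) \/ Xredex (pES q x u).
Proof.
case: es_setsP => // xUA nvar nin valA _ lcu xq rM rX.
case: (lc_term_cases lcu) => [uv|uv|ui|[H [t1 [t2 [HH ->]]]]].
- by rewrite uv in nvar.
- have [P0 [U0 [A0 [HX0 E0 xA0 _]]]] := rX (valA uv).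
  have [U0' es0] := es_sets_val_some U0 uv xA0.
  right; exists (pctxES P0 x u), U0', A0, x, u; split=> //; last exact: lookup_new.
    by apply: Xctx_pctxES HX0 _ es0; rewrite (plugt_pdom E0).
  by rewrite plugt_pctxES E0.
- by rewrite ui in nin.
- have [P0 [U0 [A0 [HM0 E0 xUA0 _]]]] := rM xUA.
  left; exists (progC (plugt P0 (fvar x)) x H), (U0 ++ unC H), (A0 ++ anC H), t1, t2; split.
    by apply: M_hole; rewrite ?(plugt_pdom E0).
  by rewrite plugt_progC E0.
Qed.

Lemma unorm_pES_progress q x u : unorm q -> lc u -> x \notin dom q ->
  unorm (pES q x u) \/ Mredex (pES q x u) \/ Xredex (pES q x u).
Proof.
move=> [ui|[ua|[y g]]] lcu xq.
- have [sub rM rX] := uinert_needed_rooted ui.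
  case es: (es_sets (unP q) (anP q) x u) => [[U' A']|].
    by left; left; apply: uinert_pES_es_sets es.
  right; apply: (redex_pES_needed es lcu xq) => [xUA|xA]; last exact: rX.
  apply: rM xq; move: xUA; rewrite mem_cat => /orP[/unP_sub_nvP|/anP_sub_nvP] //.
- by left; right; left; apply: uabs_skip.
case: (eqVneq x y) g => [<-|xy] g; last by left; right; right; exists y; apply: gvar_skip.
case: (lc_term_cases lcu) => [|uv|ui|[H [t1 [t2 [HH ->]]]]].
- by case: u {lcu} => // z _; left; right; right; exists z; apply: gvar_ren.
- by left; right; left; apply: uabs_var g uv xq.
- by left; left; apply: uinert_var g ui xq.
have [P [HM E]] := gvar_Mctx g.
right; left; exists (progC (plugt P (fvar x)) x H), (unC H), (anC H), t1, t2; split.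
  by apply: (@M_hole P [::] [::]); rewrite ?(plugt_pdom E).
by rewrite plugt_progC E.
Qed.

Lemma Mredex_pES q x u : Mredex q -> lc u -> x \notin dom q ->
  Mredex (pES q x u) \/ Xredex (pES q x u).
Proof.
move=> [P [U [A [t1 [t2 [HM ->]]]]]] lcu; rewrite dom_plugt => xP.
case es: (es_sets U A x u) => [[U' A']|].
  left; exists (pctxES P x u), U', A', t1, t2; rewrite plugt_pctxES; split=> //.
  exact: Mctx_pctxES es.
apply: (redex_pES_needed (U1 := U) (A1 := A) (U2 := U) (A2 := A) es lcu); rewrite ?dom_plugt //.
  by move=> xUA; apply: Mctx_Mrooted.
by move=> xA; apply: Mctx_Xrooted.
Qed.

Lemma Xredex_pES q x u : Xredex q -> lc u -> x \notin dom q -> uniq (dom q) ->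
  Mredex (pES q x u) \/ Xredex (pES q x u).
Proof.
move=> [P [U [A [h [v [HX -> hv vv]]]]]] lcu xP uq; rewrite dom_plugt in xP.
have hval : val_lookup P h.
  by move=> w hw; rewrite -(In_uniq_fst uq (lookup_plugt (fvar h) hv) (lookup_plugt (fvar h) hw)).
have xh : x != h by apply: contraNneq xP => ->; apply: lookup_pdom hv.
case es: (es_sets U A x u) => [[U' A']|].
  right; exists (pctxES P x u), U', A', h, v; rewrite plugt_pctxES; split=> //.
    exact: Xctx_pctxES es.
  by apply/lookup_pctxES; right.
apply: (redex_pES_needed (U1 := h :: U) (A1 := A) (U2 := h :: U) (A2 := A) es lcu);
  rewrite ?dom_plugt //.
  by move=> xUA; apply: Xctx_Mrooted.
by move=> xA; apply: Xctx_Xrooted.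
Qed.

Lemma wf_prog_cons t x u E : wf_prog (t, (x, u) :: E) ->
  [/\ wf_prog (t, E), x \notin dom (t, E) & lc u].
Proof.
rewrite /wf_prog /dom /= => /andP[/andP[/andP[-> /andP[-> ->]] /andP[-> ->]] /andP[_ ->]].
by [].
Qed.

Lemma wf_unorm_or_redex p : wf_prog p -> unorm p \/ Mredex p \/ Xredex p.
Proof.
case: p => t E; elim: E => [|[x u] E IH] wf.
  have /lc_term_cases : lc t by move: wf; rewrite /wf_prog /= !andbT.
  case=> [|tv|ti|[H [t1 [t2 [HH ->]]]]].
  - by case: t {wf} => // y _; left; right; right; exists y; apply: gvar_base.
  - by left; right; left; apply: uabs_base.
  - by left; left; apply: uinert_base.
  by right; left; exists (PC H [::]), (unC H), (anC H), t1, t2; split=> //; apply: M_base.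
have [wf' xE lcu] := wf_prog_cons wf.
have uq : uniq (dom (t, E)) by move: wf'; rewrite /wf_prog => /andP[/andP[_ ->]].
rewrite -[(t, _ :: E)]/(pES (t, E) x u).
case: (IH wf') => [nq|[mq|xq]]; first exact: unorm_pES_progress.
  by right; apply: Mredex_pES.
by right; apply: Xredex_pES.
Qed.

Lemma redex_step p : Mredex p \/ Xredex p -> exists q, step_und p q.
Proof.
set x := (\max_(a <- allvars p) a).+1.
have xp : x \notin allvars p.
  by apply/negP => /(@leq_bigmax_seq _ _ xpredT id) /(_ isT); rewrite ltnn.
case=> [[P [U [A [t [u [HM E]]]]]]|[P [U [A [h [v [HX E hv vv]]]]]]].
  by exists (plug P (open t x, [:: (x, u)])); left; exists P, U, A, t, u, x.
by exists (plugt P v); right; exists P, U, A, h, v.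
Qed.

Theorem mainTheorem8 (p : prog) :
  wf_prog p -> ((~ exists q, step_und p q) <-> unorm p).
Proof.
move=> wf; split.
  by move=> nostep; case: (wf_unorm_or_redex wf) => // /redex_step.
move=> up [q [[P [U [A [t [u [x [HM [E _]]]]]]]]|[P [U [A [x [v [HX [E [xv [vv _]]]]]]]]]]].
  by move: up; rewrite E => /(Mctx_unorm_fireball HM).
have sc : scoped (plugt P (fvar x)).2 by move: wf; rewrite E => /andP[].
by apply: Xctx_lookup_not_unorm HX xv vv sc _; rewrite -E.
Qed.
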